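(* For any $X \subseteq \omega$, if $\lambda\eta$ or $\lambda$ embeds in $\mathcal{K}_1^X$ then $K \le_T X$.
   Context: $K=\{e:\varphi_e(e)\downarrow\}$ is the halting set. $\lambda$ denotes the combinatory algebra of $\lambda$-terms modulo $\alpha\beta$-equivalence with application given by application of terms; $\lambda\eta$ denotes $\lambda$-terms modulo $\alpha\beta\eta$-equivalence. A pca is a set with a partial binary application operation containing distinct $\mathrm{s},\mathrm{k}$ with $\mathrm{k}ab\downarrow=a$, $\mathrm{s}ab\downarrow$, $\mathrm{s}abc\simeq(ac)(bc)$. An embedding of pcas is an injective map $f$ with: if $ab$ is defined then $f(a)f(b)$ is defined and equals $f(ab)$. $\mathcal{K}_1^X$ is the pca on $\omega$ with $n\cdot m=\Phi^X_n(m)$, the $n$-th partial $X$-computable function applied to $m$. *)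

From Stdlib Require Import Arith List Relations Cantor.
Import ListNotations.

(* ---------- lambda-terms (de Bruijn indices; alpha-equivalence is built in) *)
Inductive term : Type :=
| Var : nat -> term
| App : term -> term -> term
| Lam : term -> term.

Fixpoint lift (k c : nat) (t : term) : term :=
  match t with
  | Var n => if n <? c then Var n else Var (n + k)
  | App t1 t2 => App (lift k c t1) (lift k c t2)
  | Lam t1 => Lam (lift k (S c) t1)
  end.

Fixpoint subst (t : term) (k : nat) (u : term) : term :=
  match t with
  | Var n => if n =? k then lift k 0 u
             else if k <? n then Var (pred n) else Var n
  | App t1 t2 => App (subst t1 k u) (subst t2 k u)
  | Lam t1 => Lam (subst t1 (S k) u)
  end.

Inductive beta_step : term -> term -> Prop :=
| b_beta : forall t u, beta_step (App (Lam t) u) (subst t 0 u)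
| b_appl : forall t t' u, beta_step t t' -> beta_step (App t u) (App t' u)
| b_appr : forall t u u', beta_step u u' -> beta_step (App t u) (App t u')
| b_lam  : forall t t', beta_step t t' -> beta_step (Lam t) (Lam t').

Inductive betaeta_step : term -> term -> Prop :=
| be_beta : forall t u, betaeta_step (App (Lam t) u) (subst t 0 u)
| be_eta  : forall t, betaeta_step (Lam (App (lift 1 0 t) (Var 0))) t
| be_appl : forall t t' u, betaeta_step t t' -> betaeta_step (App t u) (App t' u)
| be_appr : forall t u u', betaeta_step u u' -> betaeta_step (App t u) (App t u')
| be_lam  : forall t t', betaeta_step t t' -> betaeta_step (Lam t) (Lam t').

Definition beta_conv : relation term := clos_refl_sym_trans term beta_step.
Definition betaeta_conv : relation term := clos_refl_sym_trans term betaeta_step.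

Inductive instr : Type :=
| Inc : nat -> instr
| Dec : nat -> nat -> instr
| Orc : nat -> instr.

Definition prog := list instr.

Definition decode_instr (a : nat) : instr :=
  match a mod 3 with
  | 0 => Inc (a / 3)
  | 1 => let '(r, j) := Cantor.of_nat (a / 3) in Dec r j
  | _ => Orc (a / 3)
  end.

Fixpoint decode_prog_aux (fuel n : nat) : prog :=
  match fuel with
  | 0 => []
  | S fuel' =>
      match n with
      | 0 => []
      | S n' => let '(a, b) := Cantor.of_nat n' in
                decode_instr a :: decode_prog_aux fuel' b
      end
  end.

(* Goedel numbering: every program has a code *)
Definition decode (e : nat) : prog := decode_prog_aux e e.

Definition regs := nat -> nat.
Definition upd (s : regs) (r v : nat) : regs :=
  fun i => if i =? r then v else s i.

(* run with step bound; halts (with output in register 0) when the program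
   counter leaves the program *)
Fixpoint run (X : nat -> bool) (p : prog) (fuel pc : nat) (s : regs) : option nat :=
  match nth_error p pc with
  | None => Some (s 0)
  | Some i =>
      match fuel with
      | 0 => None
      | S fuel' =>
          match i with
          | Inc r => run X p fuel' (S pc) (upd s r (S (s r)))
          | Dec r j => match s r with
                       | 0 => run X p fuel' j s
                       | S v => run X p fuel' (S pc) (upd s r v)
                       end
          | Orc r => run X p fuel' (S pc) (upd s r (if X (s r) then 1 else 0))
          end
      end
  end.

Definition init (m : nat) : regs := fun i => if i =? 0 then m else 0.

Definition Phi (X : nat -> bool) (e m v : nat) : Prop :=
  exists fuel, run X (decode e) fuel 0 (init m) = Some v.

Definition K1_app (X : nat -> bool) (n m v : nat) : Prop := Phi X n m v.

(* A map from terms/conv into omega is represented by f : term -> nat that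
   respects conv; injectivity on the quotient means f t = f u -> conv t u.
   Application in the term model is total, so the embedding condition reads:
   f(t) . f(u) is defined and equals f(App t u). *)
Definition embeds_in_K1 (conv : relation term) (X : nat -> bool) : Prop :=
  exists f : term -> nat,
    (forall t u, conv t u -> f t = f u) /\
    (forall t u, f t = f u -> conv t u) /\
    (forall t u, K1_app X (f t) (f u) (f (App t u))).

Definition empty_oracle : nat -> bool := fun _ => false.

Definition K (e : nat) : Prop := exists v, Phi empty_oracle e e v.

Definition turing_reducible (A : nat -> Prop) (X : nat -> bool) : Prop :=
  exists e, forall m, (A m -> Phi X e m 1) /\ (~ A m -> Phi X e m 0).

(* Suppose f embeds the term model into K_1^X.  Then X decides K: starting from the
   constant f(num 0), applying f(SUCC) m times in K_1^X computes f(num m), one more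
   application computes f(HALTS (num m)), and the result is compared with the constant
   f(TRUE).  HALTS is a fixed-point search for a step count after which the machine m has
   halted on input m.  If it exists, HALTS (num m) beta-converts to TRUE, so the values
   agree.  If not, HALTS (num m) denotes the empty set in Plotkin's graph model whereas
   TRUE does not; since beta-eta reduction can only shrink denotations and is
   Church-Rosser, HALTS (num m) is not even beta-eta convertible to TRUE, and injectivity
   of f makes the values differ. *)

From Stdlib Require Import Arith Lia List Relations Cantor FunctionalExtensionality PropExtensionality Setoid Morphisms Bool.
Import ListNotations.

Ltac nat_cases := repeat match goal with
 | |- context [?a <? ?b] => destruct (Nat.ltb_spec a b)
 | |- context [?a =? ?b] => destruct (Nat.eqb_spec a b)
 end.

Ltac var_case := simpl; nat_cases; simpl; nat_cases; try (f_equal; lia); try lia.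

Lemma lift_0 t c : lift 0 c t = t.
Proof.
  revert c; induction t; intros c; simpl; f_equal; auto.
  nat_cases; f_equal; lia.
Qed.

Lemma lift_lift t : forall k j c c', c <= c' <= c + j ->
  lift k c' (lift j c t) = lift (k + j) c t.
Proof.
  induction t; intros k j c c' H; simpl.
  - var_case.
  - f_equal; auto.
  - f_equal; apply IHt; lia.
Qed.

Lemma lift_lift_comm t : forall j k c c', c <= c' ->
  lift j (c' + k) (lift k c t) = lift k c (lift j c' t).
Proof.
  induction t; intros j k c c' H; simpl.
  - var_case.
  - f_equal; auto.
  - f_equal. replace (S (c' + k)) with (S c' + k) by lia. apply IHt; lia.
Qed.

Lemma lift_subst_le t : forall n c p u, p <= c ->
  lift n c (subst t p u) = subst (lift n (S c) t) p (lift n (c - p) u).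
Proof.
  induction t; intros m c p u H; simpl.
  - destruct (Nat.eqb_spec n p).
    + subst. destruct (Nat.ltb_spec p (S c)); [|lia]. simpl. rewrite Nat.eqb_refl.
      rewrite <- (lift_lift_comm u m p 0 (c - p)) by lia. f_equal; lia.
    + var_case.
  - f_equal; auto.
  - f_equal. rewrite IHt by lia. f_equal.
Qed.

Lemma lift_subst_ge t : forall n c p u, c <= p ->
  lift n c (subst t p u) = subst (lift n c t) (p + n) u.
Proof.
  induction t; intros m c p u H; simpl.
  - destruct (Nat.eqb_spec n p).
    + subst. destruct (Nat.ltb_spec p c); [lia|]. simpl. rewrite Nat.eqb_refl.
      rewrite lift_lift by lia. f_equal; lia.
    + var_case.
  - f_equal; auto.
  - f_equal. rewrite IHt by lia. f_equal.
Qed.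

Lemma subst_lift_cancel t : forall n c p u, c <= p <= c + n ->
  subst (lift (S n) c t) p u = lift n c t.
Proof.
  induction t; intros m c p u H; simpl.
  - var_case.
  - f_equal; auto.
  - f_equal. apply IHt; lia.
Qed.

Lemma subst_subst t : forall p n u v,
  subst (subst t p u) (p + n) v = subst (subst t (S (p + n)) v) p (subst u n v).
Proof.
  induction t; intros p m u v; simpl.
  - destruct (Nat.eqb_spec n p).
    + subst. destruct (Nat.eqb_spec p (S (p + m))); [lia|].
      destruct (Nat.ltb_spec (S (p + m)) p); [lia|]. simpl. rewrite Nat.eqb_refl.
      rewrite (lift_subst_ge u p 0 m v) by lia. f_equal; lia.
    + destruct (Nat.eqb_spec n (S (p + m))).
      * subst. destruct (Nat.ltb_spec p (S (p + m))); [|lia]. simpl.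
        rewrite Nat.eqb_refl, subst_lift_cancel by lia. reflexivity.
      * var_case.
  - f_equal; auto.
  - f_equal. replace (S (p + m)) with (S p + m) by lia. rewrite IHt. f_equal.
Qed.

Lemma subst_lift_var t : forall k, subst (lift 1 (S k) t) k (Var 0) = t.
Proof.
  induction t; intros k; simpl.
  - var_case; rewrite lift_0; simpl; f_equal; lia.
  - f_equal; auto.
  - f_equal; auto.
Qed.

Lemma lift_inj t : forall u k c, lift k c t = lift k c u -> t = u.
Proof.
  induction t; intros u k c H; destruct u; simpl in H; try discriminate;
    try (revert H; nat_cases; discriminate).
  - revert H; nat_cases; intros E; injection E; intros; f_equal; lia.
  - injection H; intros; f_equal; eauto.
  - injection H; intros; f_equal; eauto.
Qed.

Lemma lift_eq_Lam k c t s : lift k c t = Lam s ->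
  exists s0, t = Lam s0 /\ s = lift k (S c) s0.
Proof.
  destruct t; simpl; try destruct (n <? c); intros H; try discriminate.
  injection H; intros; subst; eauto.
Qed.

Lemma lift_eq_App k c t a b : lift k c t = App a b ->
  exists a0 b0, t = App a0 b0 /\ a = lift k c a0 /\ b = lift k c b0.
Proof.
  destruct t; simpl; try destruct (n <? c); intros H; try discriminate.
  injection H; intros; subst; eauto.
Qed.

Lemma lift_eq_lift_1 s : forall k c d w, d <= c -> lift k (S c) s = lift 1 d w ->
  exists w', s = lift 1 d w' /\ w = lift k c w'.
Proof.
  induction s; intros k c d w Hd H.
  - destruct w; simpl in H; [| revert H; nat_cases; discriminate..].
    revert H; nat_cases; intros E; injection E; intros;
      exists (Var (if n <? d then n else n - 1)); simpl; nat_cases; split; f_equal; lia.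
  - destruct w; simpl in H; try destruct (n <? d); try discriminate.
    injection H; intros H1 H2.
    destruct (IHs1 _ _ _ _ Hd H2) as [a [-> ->]].
    destruct (IHs2 _ _ _ _ Hd H1) as [b [-> ->]]. exists (App a b); auto.
  - destruct w; simpl in H; try destruct (n <? d); try discriminate.
    injection H; intros H1. destruct (IHs _ (S c) (S d) _ ltac:(lia) H1) as [a [-> ->]].
    exists (Lam a); auto.
Qed.

Fixpoint closedn (n : nat) (t : term) : bool :=
  match t with
  | Var i => i <? n
  | App a b => closedn n a && closedn n b
  | Lam a => closedn (S n) a
  end.

Lemma closedn_mono t : forall n m, closedn n t = true -> n <= m -> closedn m t = true.
Proof.
  induction t; simpl; intros a b H Hab.
  - apply Nat.ltb_lt in H. apply Nat.ltb_lt. lia.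
  - apply andb_true_iff in H as [H1 H2]. rewrite (IHt1 a b), (IHt2 a b); auto.
  - apply (IHt (S a)); auto; lia.
Qed.

Lemma lift_closedn t : forall k c, closedn c t = true -> lift k c t = t.
Proof.
  induction t; simpl; intros k c H.
  - rewrite H; auto.
  - apply andb_true_iff in H as [H1 H2]. rewrite IHt1, IHt2; auto.
  - rewrite IHt; auto.
Qed.

Lemma subst_closedn t : forall k u, closedn k t = true -> subst t k u = t.
Proof.
  induction t; simpl; intros k u H.
  - apply Nat.ltb_lt in H. nat_cases; auto; lia.
  - apply andb_true_iff in H as [H1 H2]. rewrite IHt1, IHt2; auto.
  - rewrite IHt; auto.
Qed.

Notation star R := (clos_refl_trans _ R).

Lemma star_map {A B} (R : relation A) (S : relation B) (f : A -> B) :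
  (forall x y, R x y -> S (f x) (f y)) -> forall x y, star R x y -> star S (f x) (f y).
Proof. intros Hf x y H; induction H; eauto using clos_refl_trans. Qed.

Lemma star_app (R : relation term) :
  (forall t t' u, R t t' -> R (App t u) (App t' u)) ->
  (forall t u u', R u u' -> R (App t u) (App t u')) ->
  forall t t' u u', star R t t' -> star R u u' -> star R (App t u) (App t' u').
Proof.
  intros Hl Hr t t' u u' H1 H2. apply rt_trans with (App t' u).
  - apply (star_map R R (fun x => App x u)); auto.
  - apply (star_map R R (App t')); auto.
Qed.

Inductive eta_step : term -> term -> Prop :=
| e_eta t : eta_step (Lam (App (lift 1 0 t) (Var 0))) t
| e_appl t t' u : eta_step t t' -> eta_step (App t u) (App t' u)
| e_appr t u u' : eta_step u u' -> eta_step (App t u) (App t u')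
| e_lam t t' : eta_step t t' -> eta_step (Lam t) (Lam t').

Lemma betaeta_step_split t u : betaeta_step t u -> beta_step t u \/ eta_step t u.
Proof. induction 1; try destruct IHbetaeta_step; eauto using beta_step, eta_step. Qed.

Lemma beta_betaeta_step t u : beta_step t u -> betaeta_step t u.
Proof. induction 1; eauto using betaeta_step. Qed.

Lemma eta_betaeta_step t u : eta_step t u -> betaeta_step t u.
Proof. induction 1; eauto using betaeta_step. Qed.

Lemma beta_conv_betaeta_conv t u : beta_conv t u -> betaeta_conv t u.
Proof.
  induction 1; [apply rst_step, beta_betaeta_step; auto | apply rst_refl
               | apply rst_sym; auto | eapply rst_trans; eauto].
Qed.

Lemma eta_step_lift t t' : eta_step t t' -> forall k c, eta_step (lift k c t) (lift k c t').
Proof.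
  induction 1; intros k c; simpl; eauto using eta_step.
  replace (S c) with (c + 1) by lia. rewrite (lift_lift_comm t k 1 0 c) by lia. constructor.
Qed.

Lemma eta_step_subst_l t t' : eta_step t t' -> forall k u, eta_step (subst t k u) (subst t' k u).
Proof.
  induction 1; intros k v; simpl; eauto using eta_step.
  replace (S k) with (k + 1) by lia. rewrite <- (lift_subst_ge t 1 0 k v) by lia. constructor.
Qed.

Lemma eta_step_subst_r t : forall k u u', eta_step u u' ->
  star eta_step (subst t k u) (subst t k u').
Proof.
  induction t; intros k u u' H; simpl.
  - destruct (n =? k); [apply rt_step, eta_step_lift; auto|].
    destruct (k <? n); apply rt_refl.
  - apply star_app; eauto using eta_step.
  - apply (star_map eta_step eta_step Lam); eauto using eta_step.
Qed.

Lemma beta_step_lift_inv t : forall k c w, beta_step (lift k c t) w ->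
  exists t', w = lift k c t' /\ beta_step t t'.
Proof.
  induction t; intros k c w H; simpl in H.
  - destruct (n <? c); inversion H.
  - inversion H; subst.
    + destruct (lift_eq_Lam _ _ _ _ (eq_sym H1)) as [s0 [-> ->]].
      exists (subst s0 0 t2). split; [|constructor].
      rewrite lift_subst_le, Nat.sub_0_r by lia. reflexivity.
    + destruct (IHt1 _ _ _ H3) as [x [-> Hx]]. exists (App x t2); simpl; eauto using beta_step.
    + destruct (IHt2 _ _ _ H3) as [x [-> Hx]]. exists (App t1 x); simpl; eauto using beta_step.
  - inversion H; subst. destruct (IHt _ _ _ H1) as [x [-> Hx]].
    exists (Lam x); simpl; eauto using beta_step.
Qed.

Lemma eta_step_lift_inv t : forall k c w, eta_step (lift k c t) w ->
  exists t', w = lift k c t' /\ eta_step t t'.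
Proof.
  induction t; intros k c w H; simpl in H.
  - destruct (n <? c); inversion H.
  - inversion H; subst.
    + destruct (IHt1 _ _ _ H3) as [x [-> Hx]]. exists (App x t2); simpl; eauto using eta_step.
    + destruct (IHt2 _ _ _ H3) as [x [-> Hx]]. exists (App t1 x); simpl; eauto using eta_step.
  - inversion H; subst.
    + destruct (lift_eq_App _ _ _ _ _ (eq_sym H1)) as [a [b [-> [Ha Hb]]]].
      destruct b as [nb| |]; simpl in Hb; try discriminate.
      revert Hb; nat_cases; intros Hb; try discriminate;
        injection Hb; intros En; [|lia]. subst nb.
      destruct (lift_eq_lift_1 a k c 0 w ltac:(lia) (eq_sym Ha)) as [w' [-> ->]].
      exists w'; split; auto. constructor.
    + destruct (IHt _ _ _ H1) as [x [-> Hx]]. exists (Lam x); simpl; eauto using eta_step.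
Qed.

(** * Confluence of beta-eta reduction *)

Definition confluent {A} (R : relation A) :=
  forall a b c, star R a b -> star R a c -> exists d, star R b d /\ star R c d.

Definition refl_diamond {A} (R : relation A) :=
  forall a b c, R a b -> R a c -> exists d, (R b d \/ b = d) /\ (R c d \/ c = d).

Lemma refl_diamond_strip {A} (R : relation A) : refl_diamond R ->
  forall a c, star R a c -> forall b, R a b -> exists d, star R b d /\ (R c d \/ c = d).
Proof.
  intros HD a c H. apply clos_rt_rt1n in H. induction H as [a|a a' c Ha Ha'c IH]; intros b Hb.
  - exists b; split; [apply rt_refl | auto].
  - destruct (HD _ _ _ Hb Ha) as [d [[Hbd|<-] [Ha'd|<-]]].
    + destruct (IH _ Ha'd) as [e [He1 He2]].
      exists e; split; [eauto using rt_trans, rt_step | exact He2].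
    + exists c; split; [eapply rt_trans; [apply rt_step, Hbd | apply clos_rt1n_rt, Ha'c] | auto].
    + destruct (IH _ Ha'd) as [e [He1 He2]]. exists e; split; auto.
    + exists c; split; [apply clos_rt1n_rt, Ha'c | auto].
Qed.

Lemma refl_diamond_confluent {A} (R : relation A) : refl_diamond R -> confluent R.
Proof.
  intros HD a b c H. apply clos_rt_rt1n in H. revert c.
  induction H as [a|a a' b Ha _ IH]; intros c Hc.
  - exists c; split; [exact Hc | apply rt_refl].
  - destruct (refl_diamond_strip R HD _ _ Hc _ Ha) as [d [Hd1 Hd2]].
    destruct (IH _ Hd1) as [e [He1 He2]]. exists e; split; auto.
    destruct Hd2 as [Hd2|<-]; eauto using rt_trans, rt_step.
Qed.

Lemma confluent_union {A} (R S : relation A) : confluent R -> confluent S ->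
  (forall a b c, star R a b -> star S a c -> exists d, star S b d /\ star R c d) ->
  confluent (union A R S).
Proof.
  intros HR HS Hcomm.
  set (T := fun x y => star R x y \/ star S x y).
  assert (HT : refl_diamond T).
  { intros a b c [H1|H1] [H2|H2].
    - destruct (HR _ _ _ H1 H2) as [d [? ?]]. exists d; split; left; left; auto.
    - destruct (Hcomm _ _ _ H1 H2) as [d [? ?]]. exists d; split; left; [right|left]; auto.
    - destruct (Hcomm _ _ _ H2 H1) as [d [? ?]]. exists d; split; left; [left|right]; auto.
    - destruct (HS _ _ _ H1 H2) as [d [? ?]]. exists d; split; left; right; auto. }
  assert (E1 : forall x y, star (union A R S) x y -> star T x y).
  { apply (star_map _ _ (fun x => x)). intros x y [H|H]; [left|right]; apply rt_step; auto. }
  assert (E2 : forall x y, star T x y -> star (union A R S) x y).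
  { induction 1 as [x y [H|H]| |]; eauto using rt_refl, rt_trans.
    - apply (star_map R _ (fun x => x)); auto. intros; left; auto.
    - apply (star_map S _ (fun x => x)); auto. intros; right; auto. }
  intros a b c H1 H2.
  destruct (refl_diamond_confluent T HT a b c) as [d [H3 H4]]; auto. eauto.
Qed.

Inductive par : term -> term -> Prop :=
| p_var n : par (Var n) (Var n)
| p_app t t' u u' : par t t' -> par u u' -> par (App t u) (App t' u')
| p_lam t t' : par t t' -> par (Lam t) (Lam t')
| p_beta t t' u u' : par t t' -> par u u' -> par (App (Lam t) u) (subst t' 0 u').

Lemma par_refl t : par t t.
Proof. induction t; constructor; auto. Qed.

Lemma beta_step_par t u : beta_step t u -> par t u.
Proof. induction 1; constructor; auto using par_refl. Qed.

Lemma par_beta_star t u : par t u -> star beta_step t u.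
Proof.
  assert (Happ := star_app beta_step (b_appl) (b_appr)).
  assert (Hlam := star_map beta_step beta_step Lam b_lam).
  induction 1; auto using rt_refl.
  apply rt_trans with (App (Lam t') u'); auto.
  apply rt_step; constructor.
Qed.

Lemma par_lift t t' : par t t' -> forall k c, par (lift k c t) (lift k c t').
Proof.
  induction 1; intros k c; simpl.
  - apply par_refl.
  - constructor; auto.
  - constructor; auto.
  - rewrite lift_subst_le, Nat.sub_0_r by lia. constructor; auto.
Qed.

Lemma par_subst t t' : par t t' -> forall u u' k, par u u' -> par (subst t k u) (subst t' k u').
Proof.
  induction 1; intros v v' k Hv; simpl.
  - destruct (n =? k); [apply par_lift; auto|]. destruct (k <? n); constructor.
  - constructor; auto.
  - constructor; auto.
  - pose proof (subst_subst t' 0 k u' v') as E. simpl in E. rewrite E. constructor; auto.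
Qed.

Lemma par_diamond t t1 : par t t1 -> forall t2, par t t2 -> exists t3, par t1 t3 /\ par t2 t3.
Proof.
  induction 1; intros t2 H2.
  - inversion H2; subst. exists (Var n); split; constructor.
  - inversion H2 as [| ? a1 ? b1 Ha Hb | | s0 s1 ? b1 Ha Hb]; subst.
    + destruct (IHpar1 _ Ha) as [a [Ha1 Ha2]]. destruct (IHpar2 _ Hb) as [b [Hb1 Hb2]].
      exists (App a b); split; constructor; auto.
    + inversion H; subst.
      destruct (IHpar1 (Lam s1)) as [a [Ha1 Ha2]]; [constructor; auto|].
      inversion Ha1 as [| | ? a0 Hq1 |]; subst. inversion Ha2; subst.
      destruct (IHpar2 _ Hb) as [b [Hb1 Hb2]].
      exists (subst a0 0 b); split; [constructor; auto | apply par_subst; auto].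
  - inversion H2; subst. destruct (IHpar _ H1) as [a [Ha1 Ha2]].
    exists (Lam a); split; constructor; auto.
  - inversion H2 as [| ? a1 ? b1 Ha Hb | | s0 s1 ? b1 Ha Hb]; subst.
    + inversion Ha as [| | ? a2 Ha' |]; subst. destruct (IHpar1 _ Ha') as [a [Ha1 Ha2]].
      destruct (IHpar2 _ Hb) as [b [Hb1 Hb2]].
      exists (subst a 0 b); split; [apply par_subst; auto | constructor; auto].
    + destruct (IHpar1 _ Ha) as [a [Ha1 Ha2]]. destruct (IHpar2 _ Hb) as [b [Hb1 Hb2]].
      exists (subst a 0 b); split; apply par_subst; auto.
Qed.

Lemma beta_confluent : confluent beta_step.
Proof.
  intros a b c H1 H2.
  assert (E1 : forall x y, star beta_step x y -> star par x y)
    by (apply (star_map _ _ (fun x => x)), beta_step_par).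
  assert (E2 : forall x y, star par x y -> star beta_step x y)
    by (induction 1; eauto using rt_trans, rt_refl, par_beta_star).
  destruct (refl_diamond_confluent par) with a b c as [d [H3 H4]]; eauto.
  intros x y z Hy Hz. destruct (par_diamond _ _ Hy _ Hz) as [d [? ?]]; eauto.
Qed.

Lemma eta_refl_diamond : refl_diamond eta_step.
Proof.
  intros a b c H. revert c.
  induction H as [t|t t' u Ht IH|t u u' Hu IH|t t' Ht IH]; intros c Hc.
  - inversion Hc as [t0 E | | | ? c0 Hc0 E]; subst.
    + apply lift_inj in E. subst. eauto.
    + inversion Hc0 as [| ? w ? Hw | ? ? ? Hw |]; subst; [|inversion Hw].
      destruct (eta_step_lift_inv _ _ _ _ Hw) as [t' [-> Ht']].
      exists t'; split; auto. left; constructor.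
  - inversion Hc as [ | ? t2 ? H2 | ? ? u2 H2 | ]; subst.
    + destruct (IH _ H2) as [d [Hd1 Hd2]].
      exists (App d u); split; [destruct Hd1 | destruct Hd2]; subst; auto; left; constructor; auto.
    + exists (App t' u2); split; left; constructor; auto.
  - inversion Hc as [ | ? t2 ? H2 | ? ? u2 H2 | ]; subst.
    + exists (App t2 u'); split; left; constructor; auto.
    + destruct (IH _ H2) as [d [Hd1 Hd2]].
      exists (App t d); split; [destruct Hd1 | destruct Hd2]; subst; auto; left; constructor; auto.
  - inversion Hc as [t0 E | | | ? c0 Hc0 E]; subst.
    + inversion Ht as [| ? w ? Hw | ? ? ? Hw |]; subst; [|inversion Hw].
      destruct (eta_step_lift_inv _ _ _ _ Hw) as [t'' [-> Ht']].
      exists t''; split; auto. left; constructor.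
    + destruct (IH _ Hc0) as [d [Hd1 Hd2]].
      exists (Lam d); split; [destruct Hd1 | destruct Hd2]; subst; auto; left; constructor; auto.
Qed.

Lemma eta_beta_commute_step a c : eta_step a c -> forall b, beta_step a b ->
  exists d, star eta_step b d /\ (beta_step c d \/ c = d).
Proof.
  assert (Happ := star_app eta_step e_appl e_appr).
  induction 1 as [t|t t' u Ht IH|t u u' Hu IH|t t' Ht IH]; intros b Hb.
  - inversion Hb as [| | | ? b0 Hb0]; subst.
    inversion Hb0 as [s ? E | ? w ? Hw | ? ? ? Hw |]; subst; [| |inversion Hw].
    + destruct (lift_eq_Lam _ _ _ _ (eq_sym E)) as [s0 [-> ->]].
      rewrite subst_lift_var. exists (Lam s0); split; [apply rt_refl | auto].
    + destruct (beta_step_lift_inv _ _ _ _ Hw) as [t' [-> Ht']].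
      exists t'; split; auto. apply rt_step; constructor.
  - inversion Hb as [s ? E | ? t2 ? H2 | ? ? u2 H2 |]; subst.
    + inversion Ht as [t0 E | | | ? s' Hs E]; subst.
      * simpl. rewrite subst_lift_cancel, !lift_0 by lia.
        exists (App t' u); split; [apply rt_refl | auto].
      * exists (subst s' 0 u); split; [apply rt_step, eta_step_subst_l; auto | left; constructor].
    + destruct (IH _ H2) as [d0 [Hd1 Hd2]]. exists (App d0 u); split; auto using rt_refl.
      destruct Hd2 as [Hd2|<-]; [left; constructor; auto | auto].
    + exists (App t' u2); split; [apply rt_step; constructor; auto | left; constructor; auto].
  - inversion Hb as [s ? E | ? t2 ? H2 | ? ? u2 H2 |]; subst.
    + exists (subst s 0 u'); split; [apply eta_step_subst_r; auto | left; constructor].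
    + exists (App t2 u'); split; [apply rt_step; constructor; auto | left; constructor; auto].
    + destruct (IH _ H2) as [d0 [Hd1 Hd2]]. exists (App t d0); split; auto using rt_refl.
      destruct Hd2 as [Hd2|<-]; [left; constructor; auto | auto].
  - inversion Hb as [| | | ? b0 Hb0]; subst.
    destruct (IH _ Hb0) as [d0 [Hd1 Hd2]]. exists (Lam d0); split.
    + apply (star_map eta_step eta_step Lam); auto using e_lam.
    + destruct Hd2 as [Hd2|<-]; [left; constructor; auto | auto].
Qed.

Lemma beta_eta_commute a b c : star beta_step a b -> star eta_step a c ->
  exists d, star eta_step b d /\ star beta_step c d.
Proof.
  assert (Hstrip : forall a c, star eta_step a c -> forall b, beta_step a b ->
            exists d, star eta_step b d /\ (beta_step c d \/ c = d)).
  { intros a' c' H. apply clos_rt_rt1n in H.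
    induction H as [x|x y z Hxy Hyz IH]; intros b' Hb.
    - exists b'; split; [apply rt_refl | auto].
    - destruct (eta_beta_commute_step _ _ Hxy _ Hb) as [d1 [Hd1 [Hd2|<-]]].
      + destruct (IH _ Hd2) as [d [H1 H2]]. exists d; split; [eapply rt_trans; eauto | auto].
      + exists z; split; [eapply rt_trans; [exact Hd1 | apply clos_rt1n_rt, Hyz] | auto]. }
  intros H. apply clos_rt_rt1n in H. revert c.
  induction H as [x|x y z Hxy _ IH]; intros c Hc.
  - exists c; split; [auto | apply rt_refl].
  - destruct (Hstrip _ _ Hc _ Hxy) as [d1 [Hd1 Hd2]].
    destruct (IH _ Hd1) as [d [H1 H2]]. exists d; split; auto.
    destruct Hd2 as [Hd2|<-]; eauto using rt_trans, rt_step.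
Qed.

Lemma betaeta_confluent : confluent betaeta_step.
Proof.
  assert (E : forall x y, star betaeta_step x y <-> star (union _ beta_step eta_step) x y).
  { intros x y; split; apply (star_map _ _ (fun z => z)).
    - intros z w H; destruct (betaeta_step_split _ _ H); [left|right]; auto.
    - intros z w [H|H]; auto using beta_betaeta_step, eta_betaeta_step. }
  intros a b c H1 H2. apply E in H1, H2.
  destruct (confluent_union beta_step eta_step beta_confluent
              (refl_diamond_confluent _ eta_refl_diamond) beta_eta_commute a b c H1 H2)
    as [d [H3 H4]].
  exists d; split; apply E; auto.
Qed.

Lemma betaeta_church_rosser t u : betaeta_conv t u ->
  exists w, star betaeta_step t w /\ star betaeta_step u w.
Proof.
  induction 1 as [x y H|x|x y _ [w [? ?]]|x y z _ [w1 [A1 B1]] _ [w2 [A2 B2]]].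
  - exists y; split; [apply rt_step; auto | apply rt_refl].
  - exists x; split; apply rt_refl.
  - eauto.
  - destruct (betaeta_confluent _ _ _ B1 A2) as [w [C1 C2]].
    exists w; split; eauto using rt_trans.
Qed.

Definition TRUE := Lam (Lam (Var 1)).
Definition FALSE := Lam (Lam (Var 0)).

Lemma TRUE_betaeta_normal w : star betaeta_step TRUE w -> w = TRUE.
Proof.
  intros H. apply clos_rt_rt1n in H. inversion H as [|? v ? Hv]; subst; [reflexivity|].
  repeat match goal with K : betaeta_step _ _ |- _ => inversion K; subst; clear K end.
Qed.

(** * The graph model *)

(* Plotkin's model P(omega): [finset e] is the finite set whose members are the bits of [e],
   and a function is the set of codes [to_nat (e, x)] of its finite steps. *)
Definition pset := nat -> Prop.
Definition finset (e : nat) : pset := fun k => Nat.testbit e k = true.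
Definition subset (A B : pset) := forall x, A x -> B x.

Definition gapp (F A : pset) : pset :=
  fun x => exists e, subset (finset e) A /\ F (Cantor.to_nat (e, x)).
Definition glam (P : pset -> pset) : pset :=
  fun c => P (finset (fst (Cantor.of_nat c))) (snd (Cantor.of_nat c)).
Definition scons (d : pset) (r : nat -> pset) : nat -> pset :=
  fun n => match n with 0 => d | S n => r n end.

Fixpoint denote (t : term) (r : nat -> pset) : pset :=
  match t with
  | Var n => r n
  | App t u => gapp (denote t r) (denote u r)
  | Lam t => glam (fun d => denote t (scons d r))
  end.

Lemma pset_ext (A B : pset) : (forall x, A x <-> B x) -> A = B.
Proof.
  intros H; apply functional_extensionality; intros x; apply propositional_extensionality; auto.
Qed.

Lemma gapp_mono F F' A A' : subset F F' -> subset A A' -> subset (gapp F A) (gapp F' A').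
Proof. intros H1 H2 x [e [He Hf]]. exists e; split; auto. intros k Hk; auto. Qed.

Lemma glam_mono (P Q : pset -> pset) : (forall d, subset (P d) (Q d)) -> subset (glam P) (glam Q).
Proof. intros H x Hx. apply H, Hx. Qed.

Lemma denote_mono t : forall r r', (forall n, subset (r n) (r' n)) ->
  subset (denote t r) (denote t r').
Proof.
  induction t; intros r r' H; simpl.
  - apply H.
  - apply gapp_mono; auto.
  - apply glam_mono. intros d. apply IHt. intros [|n]; simpl; auto. intros x; auto.
Qed.

Lemma testbit_lt e k : Nat.testbit e k = true -> k < e.
Proof.
  intros H. destruct (Nat.lt_ge_cases k e) as [|Hk]; auto. exfalso.
  apply Nat.testbit_true in H. rewrite Nat.div_small in H; [discriminate|].
  apply Nat.lt_le_trans with (2 ^ e); [apply Nat.pow_gt_lin_r; lia|].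
  apply Nat.pow_le_mono_r; lia.
Qed.

Lemma finset_lor a b k : finset (Nat.lor a b) k <-> finset a k \/ finset b k.
Proof.
  unfold finset. rewrite Nat.lor_spec.
  destruct (Nat.testbit a k), (Nat.testbit b k); simpl; intuition.
Qed.

Definition finite_env_below (s : nat -> nat) (r : nat -> pset) :=
  forall n, subset (finset (s n)) (r n).

Lemma finite_env_join s1 s2 r : finite_env_below s1 r -> finite_env_below s2 r ->
  finite_env_below (fun n => Nat.lor (s1 n) (s2 n)) r.
Proof. intros H1 H2 n k Hk. apply finset_lor in Hk as [Hk|Hk]; [apply H1 | apply H2]; auto. Qed.

Lemma finset_lor_l a b : subset (finset a) (finset (Nat.lor a b)).
Proof. intros k Hk. apply finset_lor; auto. Qed.

Lemma finset_lor_r a b : subset (finset b) (finset (Nat.lor a b)).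
Proof. intros k Hk. apply finset_lor; auto. Qed.

Lemma finite_env_bounded t r e :
  (forall k, finset e k -> exists s, finite_env_below s r /\ denote t (fun n => finset (s n)) k) ->
  exists s, finite_env_below s r /\ forall k, finset e k -> denote t (fun n => finset (s n)) k.
Proof.
  intros He.
  assert (U : forall N, exists s, finite_env_below s r /\
            forall k, k < N -> finset e k -> denote t (fun n => finset (s n)) k).
  { induction N as [|N [s [Hs Hs']]].
    - exists (fun _ => 0). split; [|intros; lia].
      intros n k Hk. unfold finset in Hk; rewrite Nat.bits_0 in Hk; discriminate.
    - destruct (Nat.testbit e N) eqn:EN.
      + destruct (He _ EN) as [s2 [Hs2 Hs2']].
        exists (fun n => Nat.lor (s n) (s2 n)). split; [apply finite_env_join; auto|].
        intros k Hk Hek. destruct (Nat.eq_dec k N) as [->|].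
        * eapply denote_mono; [|apply Hs2']. intros i. apply finset_lor_r.
        * eapply denote_mono; [|apply Hs'; auto; lia]. intros i. apply finset_lor_l.
      + exists s. split; auto. intros k Hk Hek. destruct (Nat.eq_dec k N) as [->|].
        * unfold finset in Hek. congruence.
        * apply Hs'; auto; lia. }
  destruct (U e) as [s [Hs Hs']]. exists s; split; auto.
  intros k Hk. apply Hs'; auto. apply testbit_lt; auto.
Qed.

Lemma denote_finite_env t : forall r x, denote t r x ->
  exists s, finite_env_below s r /\ denote t (fun n => finset (s n)) x.
Proof.
  induction t; intros r x H; simpl in *.
  - exists (fun i => if i =? n then 2 ^ x else 0). split.
    + intros i k Hk. unfold finset in Hk. destruct (Nat.eqb_spec i n).
      * subst. rewrite Nat.pow2_bits_eqb in Hk. apply Nat.eqb_eq in Hk. subst; auto.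
      * rewrite Nat.bits_0 in Hk; discriminate.
    + rewrite Nat.eqb_refl. unfold finset. rewrite Nat.pow2_bits_eqb. apply Nat.eqb_refl.
  - destruct H as [e [He Hf]].
    destruct (IHt1 _ _ Hf) as [s1 [Hs1 Hs1']].
    destruct (finite_env_bounded t2 r e) as [s2 [Hs2 Hs2']]; [intros k Hk; apply IHt2, He, Hk|].
    exists (fun n => Nat.lor (s1 n) (s2 n)). split; [apply finite_env_join; auto|].
    exists e. split.
    + intros k Hk. eapply denote_mono; [|apply Hs2', Hk]. intros n; apply finset_lor_r.
    + eapply denote_mono; [|apply Hs1']. intros n; apply finset_lor_l.
  - destruct (IHt _ _ H) as [s [Hs Hs']].
    exists (fun n => s (S n)). split; [intros n; apply (Hs (S n))|].
    unfold glam. eapply denote_mono; [|apply Hs']. intros [|n]; simpl.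
    + apply (Hs 0).
    + intros k; auto.
Qed.

Lemma gapp_glam t r A : gapp (glam (fun d => denote t (scons d r))) A = denote t (scons A r).
Proof.
  apply pset_ext; intros x; split.
  - intros [e [He Hx]]. unfold glam in Hx. rewrite Cantor.cancel_of_to in Hx. simpl in Hx.
    eapply denote_mono; [|apply Hx]. intros [|n]; simpl; auto. intros k; auto.
  - intros Hx. destruct (denote_finite_env _ _ _ Hx) as [s [Hs Hs']].
    exists (s 0). split; [apply (Hs 0)|].
    unfold glam. rewrite Cantor.cancel_of_to. simpl. eapply denote_mono; [|apply Hs'].
    intros [|n]; simpl; [intros k; auto | apply (Hs (S n))].
Qed.

Lemma denote_lift t : forall k c r,
  denote (lift k c t) r = denote t (fun i => if i <? c then r i else r (i + k)).
Proof.
  induction t; intros k c r; simpl.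
  - destruct (n <? c); reflexivity.
  - rewrite IHt1, IHt2; reflexivity.
  - f_equal. apply functional_extensionality; intros d. rewrite IHt. f_equal.
    apply functional_extensionality; intros [|i]; reflexivity.
Qed.

Lemma denote_subst t : forall k u r, denote (subst t k u) r =
  denote t (fun i => if i <? k then r i
                     else if i =? k then denote u (fun j => r (j + k)) else r (i - 1)).
Proof.
  induction t; intros k u r; simpl.
  - nat_cases; simpl; try lia; try reflexivity.
    + f_equal; lia.
    + rewrite denote_lift. f_equal.
  - rewrite IHt1, IHt2; reflexivity.
  - f_equal. apply functional_extensionality; intros d. rewrite IHt. f_equal.
    apply functional_extensionality; intros [|i]; simpl; [reflexivity|].
    replace (S i <? S k) with (i <? k) by reflexivity.
    nat_cases; try lia; try reflexivity.
    + f_equal. apply functional_extensionality; intros j.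
      replace (j + S k) with (S (j + k)) by lia. reflexivity.
    + destruct i; [lia|]. simpl. f_equal; lia.
Qed.

Lemma denote_beta t u r : denote (App (Lam t) u) r = denote (subst t 0 u) r.
Proof.
  simpl. rewrite gapp_glam, denote_subst. f_equal.
  apply functional_extensionality; intros [|i]; simpl; try reflexivity.
  - f_equal. apply functional_extensionality; intros j. f_equal; lia.
  - f_equal; lia.
Qed.

Lemma denote_beta_conv t u : beta_conv t u -> forall r, denote t r = denote u r.
Proof.
  assert (Hstep : forall t u, beta_step t u -> forall r, denote t r = denote u r).
  { induction 1; intros r; simpl.
    - apply denote_beta.
    - rewrite IHbeta_step; auto.
    - rewrite IHbeta_step; auto.
    - f_equal. apply functional_extensionality; intros d; auto. }
  induction 1; intros r; auto. rewrite IHclos_refl_sym_trans1; auto.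
Qed.

Lemma denote_eta t r : subset (denote t r) (denote (Lam (App (lift 1 0 t) (Var 0))) r).
Proof.
  intros x Hx. simpl. unfold glam. rewrite denote_lift.
  exists (fst (Cantor.of_nat x)). split; [intros k; simpl; auto|].
  eapply denote_mono; [|rewrite <- surjective_pairing, Cantor.cancel_to_of; exact Hx].
  intros i y Hy. simpl. replace (i + 1) with (S i) by lia. exact Hy.
Qed.

(* eta is sound only as an inclusion, so reduction can only shrink a denotation *)
Lemma denote_betaeta_star t u : star betaeta_step t u -> forall r, subset (denote u r) (denote t r).
Proof.
  assert (Hstep : forall t u, betaeta_step t u -> forall r, subset (denote u r) (denote t r)).
  { induction 1; intros r.
    - rewrite denote_beta. intros x; auto.
    - apply denote_eta.
    - apply gapp_mono; auto. intros x; auto.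
    - apply gapp_mono; auto. intros x; auto.
    - apply glam_mono; auto. }
  induction 1 as [x y Hxy|x|x y z _ IH1 _ IH2]; intros r v Hv.
  - exact (Hstep _ _ Hxy r v Hv).
  - exact Hv.
  - apply IH1, IH2, Hv.
Qed.

Lemma betaeta_conv_TRUE_nonempty t : betaeta_conv t TRUE -> forall r, exists x, denote t r x.
Proof.
  intros H r. destruct (betaeta_church_rosser _ _ H) as [w [H1 H2]].
  apply TRUE_betaeta_normal in H2. subst.
  (* the step <{0}, <{}, 0>> of [fun a b => a] *)
  exists (Cantor.to_nat (1, Cantor.to_nat (0, 0))).
  apply (denote_betaeta_star _ _ H1). reflexivity.
Qed.

Lemma denote_closedn t : forall n r r', closedn n t = true -> (forall i, i < n -> r i = r' i) ->
  denote t r = denote t r'.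
Proof.
  induction t; intros m r r' Hc H; simpl in *.
  - apply H. apply Nat.ltb_lt; auto.
  - apply andb_true_iff in Hc as [Hc1 Hc2]. erewrite IHt1, IHt2; eauto.
  - f_equal. apply functional_extensionality; intros d. apply (IHt (S m)); auto.
    intros [|i] Hi; simpl; auto. apply H; lia.
Qed.

(** * Programming with closed lambda-terms *)

#[export] Instance beta_conv_equiv : Equivalence beta_conv.
Proof.
  split.
  - intros x; apply rst_refl.
  - intros x y H; apply rst_sym; auto.
  - intros x y z H1 H2; eapply rst_trans; eauto.
Qed.

Lemma beta_conv_map (f : term -> term) : (forall x y, beta_step x y -> beta_step (f x) (f y)) ->
  forall x y, beta_conv x y -> beta_conv (f x) (f y).
Proof.
  intros Hf x y H. induction H.
  - apply rst_step; auto.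
  - reflexivity.
  - symmetry; auto.
  - etransitivity; eauto.
Qed.

#[export] Instance App_proper : Proper (beta_conv ==> beta_conv ==> beta_conv) App.
Proof.
  intros a a' Ha b b' Hb. transitivity (App a' b).
  - apply (beta_conv_map (fun x => App x b)); auto using beta_step.
  - apply (beta_conv_map (App a')); auto using beta_step.
Qed.

#[export] Instance Lam_proper : Proper (beta_conv ==> beta_conv) Lam.
Proof. intros a a' Ha. apply (beta_conv_map Lam); auto using beta_step. Qed.

Lemma beta_rule t u : beta_conv (App (Lam t) u) (subst t 0 u).
Proof. apply rst_step; constructor. Qed.

Definition closed t := closedn 0 t = true.

Lemma lift_closed t k c : closed t -> lift k c t = t.
Proof. intros H. apply lift_closedn. eapply closedn_mono; eauto; lia. Qed.

Lemma subst_closed t k u : closed t -> subst t k u = t.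
Proof. intros H. apply subst_closedn. eapply closedn_mono; eauto; lia. Qed.

Lemma closed_App a b : closed a -> closed b -> closed (App a b).
Proof. unfold closed; simpl; intros -> ->; auto. Qed.

Lemma denote_closed t r r' : closed t -> denote t r = denote t r'.
Proof. intros H. apply (denote_closedn t 0); auto. intros; lia. Qed.

Create HintDb closed.
#[export] Hint Resolve closed_App : closed.
#[export] Hint Extern 1 (closed _) => vm_compute; reflexivity : closed.

Ltac solve_closed := solve [assumption | eauto 20 with closed].

Ltac simpl_subst :=
  cbn [subst lift Nat.eqb Nat.ltb Nat.leb Nat.pred Nat.add];
  repeat first [ rewrite lift_0 | rewrite lift_closed by solve_closed
               | rewrite subst_closed by solve_closed ].

Ltac beta := rewrite beta_rule; simpl_subst.

Arguments TRUE : simpl never.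
Arguments FALSE : simpl never.

Definition tbool (b : bool) := if b then TRUE else FALSE.
Arguments tbool : simpl never.

Lemma closed_tbool b : closed (tbool b).
Proof. destruct b; reflexivity. Qed.
#[export] Hint Resolve closed_tbool : closed.

Lemma TRUE_app a b : closed a -> beta_conv (App (App TRUE a) b) a.
Proof. intros Ha. unfold TRUE. beta. beta. reflexivity. Qed.

Lemma FALSE_app a b : beta_conv (App (App FALSE a) b) b.
Proof. unfold FALSE. beta. beta. reflexivity. Qed.

Lemma tbool_app b x y : closed x -> beta_conv (App (App (tbool b) x) y) (if b then x else y).
Proof. destruct b; intros; [apply TRUE_app | apply FALSE_app]; auto. Qed.

Definition num (n : nat) := Lam (Lam (Nat.iter n (App (Var 1)) (Var 0))).
Arguments num : simpl never.

Lemma closed_num n : closed (num n).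
Proof. unfold closed, num. simpl. induction n; simpl; auto. Qed.
#[export] Hint Resolve closed_num : closed.

Lemma num_app n f x : beta_conv (App (App (num n) f) x) (Nat.iter n (App f) x).
Proof.
  assert (Hsubst : forall n f x k u,
            subst (Nat.iter n (App f) x) k u = Nat.iter n (App (subst f k u)) (subst x k u))
    by (induction n0; intros; simpl; f_equal; auto).
  unfold num. rewrite beta_rule. simpl. rewrite Hsubst. simpl.
  rewrite beta_rule, Hsubst. simpl. rewrite lift_0, subst_lift_cancel, lift_0 by lia.
  reflexivity.
Qed.

Lemma iter_invariant (P : nat -> term) (F x0 : term) : beta_conv x0 (P 0) ->
  (forall k, beta_conv (App F (P k)) (P (S k))) -> forall n, beta_conv (Nat.iter n (App F) x0) (P n).
Proof. intros H0 HS n. induction n; simpl; auto. rewrite IHn. auto. Qed.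

Definition PAIR := Lam (Lam (Lam (App (App (Var 0) (Var 2)) (Var 1)))).
Notation tpair a b := (App (App PAIR a) b).

Definition FST := Lam (App (Var 0) TRUE).
Definition SND := Lam (App (Var 0) FALSE).

Lemma tpair_app a b f : closed a -> closed b -> beta_conv (App (tpair a b) f) (App (App f a) b).
Proof. intros Ha Hb. unfold PAIR. beta. beta. beta. reflexivity. Qed.

Lemma FST_tpair a b : closed a -> closed b -> beta_conv (App FST (tpair a b)) a.
Proof. intros Ha Hb. unfold FST at 1. beta. rewrite tpair_app by auto. apply TRUE_app; auto. Qed.

Lemma SND_tpair a b : closed a -> closed b -> beta_conv (App SND (tpair a b)) b.
Proof. intros Ha Hb. unfold SND at 1. beta. rewrite tpair_app by auto. apply FALSE_app; auto. Qed.

Definition SUCC := Lam (Lam (Lam (App (Var 1) (App (App (Var 2) (Var 1)) (Var 0))))).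

Lemma SUCC_num n : beta_conv (App SUCC (num n)) (num (S n)).
Proof. unfold SUCC. beta. rewrite num_app. reflexivity. Qed.

Definition ISZERO := Lam (App (App (Var 0) (Lam FALSE)) TRUE).

Lemma ISZERO_num n : beta_conv (App ISZERO (num n)) (tbool (n =? 0)).
Proof.
  unfold ISZERO. beta. rewrite num_app.
  apply (iter_invariant (fun k => tbool (k =? 0))); [reflexivity|].
  intros k. beta. reflexivity.
Qed.

Definition PRED_STEP := Lam (tpair (App SND (Var 0)) (App SUCC (App SND (Var 0)))).
Definition PRED := Lam (App FST (App (App (Var 0) PRED_STEP) (tpair (num 0) (num 0)))).

Lemma PRED_num n : beta_conv (App PRED (num n)) (num (pred n)).
Proof.
  unfold PRED. beta. rewrite num_app.
  rewrite (iter_invariant (fun k => tpair (num (pred k)) (num k))).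
  - apply FST_tpair; solve_closed.
  - reflexivity.
  - intros k. unfold PRED_STEP at 1. beta.
    rewrite SND_tpair, SUCC_num by solve_closed. reflexivity.
Qed.

Definition SUB := Lam (Lam (App (App (Var 0) PRED) (Var 1))).

Lemma SUB_num a b : beta_conv (App (App SUB (num a)) (num b)) (num (a - b)).
Proof.
  unfold SUB. beta. beta. rewrite num_app.
  apply (iter_invariant (fun k => num (a - k))); [rewrite Nat.sub_0_r; reflexivity|].
  intros k. rewrite PRED_num. f_equiv. f_equal. lia.
Qed.

Definition AND := Lam (Lam (App (App (Var 1) (Var 0)) FALSE)).

Lemma AND_tbool x y : beta_conv (App (App AND (tbool x)) (tbool y)) (tbool (x && y)).
Proof. unfold AND. beta. beta. rewrite tbool_app by solve_closed. destruct x; reflexivity. Qed.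

Definition EQN := Lam (Lam (App (App AND (App ISZERO (App (App SUB (Var 1)) (Var 0))))
                               (App ISZERO (App (App SUB (Var 0)) (Var 1))))).

Lemma EQN_num a b : beta_conv (App (App EQN (num a)) (num b)) (tbool (a =? b)).
Proof.
  unfold EQN. beta. beta. rewrite !SUB_num, !ISZERO_num, AND_tbool.
  replace ((a - b =? 0) && (b - a =? 0)) with (a =? b); [reflexivity|].
  destruct (Nat.eqb_spec a b), (Nat.eqb_spec (a - b) 0), (Nat.eqb_spec (b - a) 0); simpl; auto; lia.
Qed.

(** * Register machines *)

Definition exec (X : nat -> bool) (i : instr) (pc : nat) (s : regs) : nat * regs :=
  match i with
  | Inc r => (S pc, upd s r (S (s r)))
  | Dec r j => match s r with 0 => (j, s) | S v => (S pc, upd s r v) end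
  | Orc r => (S pc, upd s r (if X (s r) then 1 else 0))
  end.

Definition mstep X (p : prog) (c c' : nat * regs) :=
  exists i, nth_error p (fst c) = Some i /\ c' = exec X i (fst c) (snd c).

Lemma run_S X p fuel pc s : run X p (S fuel) pc s =
  match nth_error p pc with
  | None => Some (s 0)
  | Some i => run X p fuel (fst (exec X i pc s)) (snd (exec X i pc s))
  end.
Proof. simpl. destruct (nth_error p pc) as [[r|r j|r]|]; simpl; auto. destruct (s r); auto. Qed.

Lemma run_star X p fuel : forall pc s v, run X p fuel pc s = Some v ->
  exists c', star (mstep X p) (pc, s) c' /\ nth_error p (fst c') = None /\ snd c' 0 = v.
Proof.
  induction fuel; intros pc s v H.
  - simpl in H. destruct (nth_error p pc) eqn:E; [discriminate|].
    injection H; intros <-. exists (pc, s); auto using rt_refl.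
  - rewrite run_S in H. destruct (nth_error p pc) as [i|] eqn:E.
    + destruct (IHfuel _ _ _ H) as [c' [Hc' Hend]]. exists c'; split; auto.
      rewrite <- surjective_pairing in Hc'.
      eapply rt_trans; [apply rt_step; exists i; split; [exact E | reflexivity] | exact Hc'].
    + injection H; intros <-. exists (pc, s); auto using rt_refl.
Qed.

Lemma star_run X p c c' : star (mstep X p) c c' -> nth_error p (fst c') = None ->
  exists fuel, run X p fuel (fst c) (snd c) = Some (snd c' 0).
Proof.
  intros H. apply clos_rt_rt1n in H.
  induction H as [c|c c1 c2 [i [Hi ->]] _ IH]; intros Hn.
  - exists 0. destruct c as [pc s]; simpl in *. rewrite Hn. auto.
  - destruct (IH Hn) as [fuel Hf]. exists (S fuel). rewrite run_S, Hi. exact Hf.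
Qed.

Definition next (p : prog) (c : nat * regs) : nat * regs :=
  match nth_error p (fst c) with None => c | Some i => exec empty_oracle i (fst c) (snd c) end.

Lemma iter_next_halted p c n : nth_error p (fst c) = None -> Nat.iter n (next p) c = c.
Proof. intros H. induction n; simpl; auto. rewrite IHn. unfold next. rewrite H. auto. Qed.

Lemma run_empty_oracle_iter p fuel : forall pc s,
  run empty_oracle p fuel pc s <> None <-> nth_error p (fst (Nat.iter fuel (next p) (pc, s))) = None.
Proof.
  induction fuel; intros pc s.
  - simpl. destruct (nth_error p pc); split; congruence.
  - rewrite run_S, Nat.iter_succ_r. unfold next at 2. simpl fst. simpl snd.
    destruct (nth_error p pc) as [i|] eqn:E.
    + rewrite IHfuel, <- surjective_pairing. reflexivity.
    + rewrite iter_next_halted by auto. simpl. split; congruence.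
Qed.

Lemma K_iff m : K m <->
  exists n, nth_error (decode m) (fst (Nat.iter n (next (decode m)) (0, init m))) = None.
Proof.
  unfold K, Phi. split.
  - intros [v [fuel H]]. exists fuel. apply run_empty_oracle_iter. congruence.
  - intros [n H]. apply run_empty_oracle_iter in H.
    destruct (run empty_oracle (decode m) n 0 (init m)) eqn:E; [|congruence].
    exists n0, n. auto.
Qed.

Definition code_tail (n : nat) := match n with 0 => 0 | S n' => snd (Cantor.of_nat n') end.
Definition code_drop (m pc : nat) := Nat.iter pc code_tail m.

Lemma nth_error_decode_prog_aux fuel : forall n, n <= fuel -> forall pc,
  nth_error (decode_prog_aux fuel n) pc =
  match code_drop n pc with 0 => None | S k => Some (decode_instr (fst (Cantor.of_nat k))) end.
Proof.
  assert (Hdrop0 : forall pc, code_drop 0 pc = 0)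
    by (induction pc; simpl; auto; rewrite IHpc; auto).
  induction fuel; intros n Hn pc.
  - replace n with 0 by lia. rewrite Hdrop0. destruct pc; auto.
  - destruct n as [|n']; [rewrite Hdrop0; destruct pc; auto|].
    simpl. destruct (Cantor.of_nat n') as [a b] eqn:Eab. destruct pc as [|pc].
    + simpl. rewrite Eab. auto.
    + unfold code_drop. rewrite Nat.iter_succ_r. simpl code_tail. rewrite Eab. simpl.
      apply IHfuel.
      pose proof (Cantor.to_nat_non_decreasing a b) as Hle.
      rewrite <- Eab, Cantor.cancel_to_of in Hle. lia.
Qed.

Lemma nth_error_decode m pc : nth_error (decode m) pc =
  match code_drop m pc with 0 => None | S k => Some (decode_instr (fst (Cantor.of_nat k))) end.
Proof. apply nth_error_decode_prog_aux. lia. Qed.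

Definition encode_instr (i : instr) : nat :=
  match i with Inc r => 3 * r | Dec r j => 3 * Cantor.to_nat (r, j) + 1 | Orc r => 3 * r + 2 end.

Lemma divmod3 x k : k < 3 -> (3 * x + k) / 3 = x /\ (3 * x + k) mod 3 = k.
Proof.
  intros Hk. split; [symmetry; apply (Nat.div_unique _ _ _ k) | symmetry; apply (Nat.mod_unique _ _ x)]; lia.
Qed.

Lemma decode_encode_instr i : decode_instr (encode_instr i) = i.
Proof.
  destruct i as [r|r j|r]; unfold decode_instr, encode_instr.
  - destruct (divmod3 r 0 ltac:(lia)) as [E1 E2]. rewrite Nat.add_0_r in E1, E2. rewrite E2, E1. auto.
  - destruct (divmod3 (Cantor.to_nat (r, j)) 1 ltac:(lia)) as [E1 E2].
    rewrite E2, E1, Cantor.cancel_of_to. auto.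
  - destruct (divmod3 r 2 ltac:(lia)) as [E1 E2]. rewrite E2, E1. auto.
Qed.

Fixpoint encode (p : prog) : nat :=
  match p with [] => 0 | i :: p => S (Cantor.to_nat (encode_instr i, encode p)) end.

Lemma decode_encode p : decode (encode p) = p.
Proof.
  assert (H : forall fuel, encode p <= fuel -> decode_prog_aux fuel (encode p) = p).
  { induction p as [|i p IH]; intros fuel H; [destruct fuel; auto|].
    destruct fuel as [|fuel]; [simpl in H; lia|]. cbn [encode decode_prog_aux] in *.
    rewrite Cantor.cancel_of_to, decode_encode_instr, IH; auto.
    pose proof (Cantor.to_nat_non_decreasing (encode_instr i) (encode p)). lia. }
  apply H. lia.
Qed.

(** * Lambda-definability of the halting problem *)

Definition UNPAIR_STEP := Lam (App (App (App ISZERO (App FST (Var 0)))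
                                         (tpair (App SUCC (App SND (Var 0))) (num 0)))
                                    (tpair (App PRED (App FST (Var 0))) (App SUCC (App SND (Var 0))))).
Definition UNPAIR := Lam (App (App (Var 0) UNPAIR_STEP) (tpair (num 0) (num 0))).

Lemma of_nat_S k : Cantor.of_nat (S k) =
  let (x, y) := Cantor.of_nat k in match x with S x => (x, S y) | 0 => (S y, 0) end.
Proof. reflexivity. Qed.

Lemma UNPAIR_num n : beta_conv (App UNPAIR (num n))
  (tpair (num (fst (Cantor.of_nat n))) (num (snd (Cantor.of_nat n)))).
Proof.
  unfold UNPAIR. beta. rewrite num_app.
  apply (iter_invariant (fun k => tpair (num (fst (Cantor.of_nat k))) (num (snd (Cantor.of_nat k)))));
    [reflexivity|].
  intros k. unfold UNPAIR_STEP at 1. beta.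
  rewrite !FST_tpair, !SND_tpair, ISZERO_num, !SUCC_num, PRED_num, tbool_app by solve_closed.
  rewrite of_nat_S. destruct (Cantor.of_nat k) as [[|x] y]; reflexivity.
Qed.

Definition TAIL := Lam (App (App (App ISZERO (Var 0)) (num 0)) (App SND (App UNPAIR (App PRED (Var 0))))).

Lemma TAIL_num n : beta_conv (App TAIL (num n)) (num (code_tail n)).
Proof.
  unfold TAIL. beta.
  rewrite ISZERO_num, PRED_num, UNPAIR_num, SND_tpair, tbool_app by solve_closed.
  destruct n; reflexivity.
Qed.

Definition DROP := Lam (Lam (App (App (Var 0) TAIL) (Var 1))).

Lemma DROP_num m pc : beta_conv (App (App DROP (num m)) (num pc)) (num (code_drop m pc)).
Proof.
  unfold DROP. beta. beta. rewrite num_app.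
  apply (iter_invariant (fun k => num (code_drop m k))); [reflexivity|].
  intros k. rewrite TAIL_num. reflexivity.
Qed.

Lemma divmod3_S k : S k / 3 = (if k mod 3 =? 2 then k / 3 + 1 else k / 3) /\
  S k mod 3 = (if k mod 3 =? 2 then 0 else S (k mod 3)).
Proof.
  pose proof (Nat.div_mod_eq k 3). pose proof (Nat.mod_upper_bound k 3 ltac:(lia)).
  destruct (Nat.eqb_spec (k mod 3) 2).
  - split; [symmetry; apply (Nat.div_unique _ _ _ 0) | symmetry; apply (Nat.mod_unique _ _ (k / 3 + 1))]; lia.
  - split; [symmetry; apply (Nat.div_unique _ _ _ (S (k mod 3))) | symmetry; apply (Nat.mod_unique _ _ (k / 3))]; lia.
Qed.

Definition DIVMOD3_STEP :=
  Lam (App (App (App (App EQN (App SND (Var 0))) (num 2)) (tpair (App SUCC (App FST (Var 0))) (num 0)))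
           (tpair (App FST (Var 0)) (App SUCC (App SND (Var 0))))).
Definition DIVMOD3 := Lam (App (App (Var 0) DIVMOD3_STEP) (tpair (num 0) (num 0))).

Lemma DIVMOD3_num a : beta_conv (App DIVMOD3 (num a)) (tpair (num (a / 3)) (num (a mod 3))).
Proof.
  unfold DIVMOD3. beta. rewrite num_app.
  apply (iter_invariant (fun k => tpair (num (k / 3)) (num (k mod 3)))); [reflexivity|].
  intros k. unfold DIVMOD3_STEP at 1. beta.
  rewrite !FST_tpair, !SND_tpair, EQN_num, !SUCC_num, tbool_app by solve_closed.
  destruct (divmod3_S k) as [-> ->].
  destruct (k mod 3 =? 2); rewrite ?Nat.add_1_r; reflexivity.
Qed.

Definition represents (R : term) (s : regs) :=
  closed R /\ forall i, beta_conv (App R (num i)) (num (s i)).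

Definition UPD := Lam (Lam (Lam (Lam
  (App (App (App (App EQN (Var 0)) (Var 2)) (Var 1)) (App (Var 3) (Var 0)))))).

Lemma UPD_represents R s r v : represents R s ->
  represents (App (App (App UPD R) (num r)) (num v)) (upd s r v).
Proof.
  intros [HcR HR]. split; [solve_closed|]. intros i. unfold UPD. beta. beta. beta. beta.
  rewrite EQN_num, HR, tbool_app by solve_closed. unfold upd. destruct (i =? r); reflexivity.
Qed.

Definition INIT := Lam (Lam (App (App (App ISZERO (Var 0)) (Var 1)) (num 0))).

Lemma INIT_represents m : represents (App INIT (num m)) (init m).
Proof.
  split; [solve_closed|]. intros i. unfold INIT. beta. beta.
  rewrite ISZERO_num, tbool_app by solve_closed. unfold init. destruct (i =? 0); reflexivity.
Qed.

Definition EXEC_INC := Lam (Lam (Lam (tpair (App SUCC (Var 1))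
  (App (App (App UPD (Var 0)) (Var 2)) (App SUCC (App (Var 0) (Var 2))))))).

Definition EXEC_DEC := Lam (Lam (Lam
  (App (App (App ISZERO (App (Var 0) (App FST (App UNPAIR (Var 2)))))
            (tpair (App SND (App UNPAIR (Var 2))) (Var 0)))
       (tpair (App SUCC (Var 1))
              (App (App (App UPD (Var 0)) (App FST (App UNPAIR (Var 2))))
                   (App PRED (App (Var 0) (App FST (App UNPAIR (Var 2)))))))))).

Definition EXEC_ORC := Lam (Lam (Lam (tpair (App SUCC (Var 1))
  (App (App (App UPD (Var 0)) (Var 2)) (num 0))))).

Definition EXEC := Lam (Lam (Lam
  (App (App (App (App EQN (App SND (App DIVMOD3 (Var 2)))) (num 0))
            (App (App (App EXEC_INC (App FST (App DIVMOD3 (Var 2)))) (Var 1)) (Var 0)))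
       (App (App (App (App EQN (App SND (App DIVMOD3 (Var 2)))) (num 1))
                 (App (App (App EXEC_DEC (App FST (App DIVMOD3 (Var 2)))) (Var 1)) (Var 0)))
            (App (App (App EXEC_ORC (App FST (App DIVMOD3 (Var 2)))) (Var 1)) (Var 0)))))).

Lemma EXEC_INC_spec q pc R s : represents R s ->
  beta_conv (App (App (App EXEC_INC (num q)) (num pc)) R)
            (tpair (num (S pc)) (App (App (App UPD R) (num q)) (num (S (s q))))).
Proof.
  intros [HcR HR]. unfold EXEC_INC. beta. beta. beta.
  rewrite !SUCC_num, HR, SUCC_num. reflexivity.
Qed.

Lemma EXEC_DEC_spec q pc R s : represents R s ->
  beta_conv (App (App (App EXEC_DEC (num q)) (num pc)) R)
    (let (r, j) := Cantor.of_nat q in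
     match s r with
     | 0 => tpair (num j) R
     | S v => tpair (num (S pc)) (App (App (App UPD R) (num r)) (num v))
     end).
Proof.
  intros [HcR HR]. destruct (Cantor.of_nat q) as [r j] eqn:Erj.
  unfold EXEC_DEC. beta. beta. beta. rewrite UNPAIR_num, Erj. simpl.
  rewrite !FST_tpair, !SND_tpair, HR, ISZERO_num, PRED_num, SUCC_num, tbool_app by solve_closed.
  destruct (s r); reflexivity.
Qed.

Lemma EXEC_ORC_spec q pc R : closed R ->
  beta_conv (App (App (App EXEC_ORC (num q)) (num pc)) R)
            (tpair (num (S pc)) (App (App (App UPD R) (num q)) (num 0))).
Proof. intros HcR. unfold EXEC_ORC. beta. beta. beta. rewrite !SUCC_num. reflexivity. Qed.

Lemma EXEC_dispatch a pc R : closed R ->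
  beta_conv (App (App (App EXEC (num a)) (num pc)) R)
    (if a mod 3 =? 0 then App (App (App EXEC_INC (num (a / 3))) (num pc)) R else
     if a mod 3 =? 1 then App (App (App EXEC_DEC (num (a / 3))) (num pc)) R else
     App (App (App EXEC_ORC (num (a / 3))) (num pc)) R).
Proof.
  intros HcR. unfold EXEC. beta. beta. beta.
  rewrite DIVMOD3_num, !FST_tpair, !SND_tpair, !EQN_num, tbool_app by solve_closed.
  destruct (a mod 3 =? 0); [reflexivity|]. rewrite tbool_app by solve_closed. reflexivity.
Qed.

(* the oracle instruction is simulated for the empty oracle, which always answers 0 *)
Lemma EXEC_spec a pc R s : represents R s ->
  exists R', represents R' (snd (exec empty_oracle (decode_instr a) pc s)) /\
    beta_conv (App (App (App EXEC (num a)) (num pc)) R)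
              (tpair (num (fst (exec empty_oracle (decode_instr a) pc s))) R').
Proof.
  intros HR. pose proof HR as [HcR _]. pose proof (EXEC_dispatch a pc R HcR) as E.
  pose proof (EXEC_DEC_spec (a / 3) pc R s HR) as D.
  unfold decode_instr. destruct (a mod 3) as [|[|k]];
    cbn -[Nat.div Cantor.of_nat upd] in E |- *.
  - eexists; split; [apply UPD_represents; eauto|]. rewrite E. apply EXEC_INC_spec; auto.
  - rewrite D in E. destruct (Cantor.of_nat (a / 3)) as [r j].
    cbn -[Nat.div upd]. destruct (s r) as [|v]; cbn -[Nat.div upd] in E |- *.
    + exists R; split; auto.
    + eexists; split; [apply UPD_represents; eauto | exact E].
  - eexists; split; [apply UPD_represents; eauto|]. rewrite E. apply EXEC_ORC_spec; auto.
Qed.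

Definition NEXT := Lam (Lam
  (App (App (App ISZERO (App (App DROP (Var 1)) (App FST (Var 0)))) (Var 0))
       (App (App (App EXEC (App FST (App UNPAIR (App PRED (App (App DROP (Var 1)) (App FST (Var 0)))))))
                 (App FST (Var 0)))
            (App SND (Var 0))))).

Lemma NEXT_spec m c R : represents R (snd c) ->
  exists R', represents R' (snd (next (decode m) c)) /\
    beta_conv (App (App NEXT (num m)) (tpair (num (fst c)) R))
              (tpair (num (fst (next (decode m) c))) R').
Proof.
  destruct c as [pc s]. simpl. intros HR. pose proof HR as [HcR _].
  assert (E : beta_conv (App (App NEXT (num m)) (tpair (num pc) R))
     (if code_drop m pc =? 0 then tpair (num pc) R else
      App (App (App EXEC (num (fst (Cantor.of_nat (pred (code_drop m pc)))))) (num pc)) R)).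
  { unfold NEXT. beta. beta.
    rewrite !FST_tpair, !SND_tpair, DROP_num, ISZERO_num, PRED_num, UNPAIR_num, FST_tpair,
      tbool_app by solve_closed.
    reflexivity. }
  unfold next. simpl. rewrite nth_error_decode.
  destruct (code_drop m pc) as [|k]; simpl in E |- *.
  - exists R; split; auto.
  - destruct (EXEC_spec (fst (Cantor.of_nat k)) pc R s HR) as [R' [H1 H2]].
    exists R'; split; auto. rewrite E. exact H2.
Qed.

Lemma NEXT_iter m n : exists R,
  represents R (snd (Nat.iter n (next (decode m)) (0, init m))) /\
  beta_conv (Nat.iter n (App (App NEXT (num m))) (tpair (num 0) (App INIT (num m))))
            (tpair (num (fst (Nat.iter n (next (decode m)) (0, init m)))) R).
Proof.
  induction n as [|n [R [HR HC]]].
  - exists (App INIT (num m)). split; [apply INIT_represents | reflexivity].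
  - simpl. destruct (NEXT_spec m _ _ HR) as [R' [H1 H2]].
    exists R'; split; auto. rewrite HC. exact H2.
Qed.

Definition halted_after (m n : nat) : bool :=
  code_drop m (fst (Nat.iter n (next (decode m)) (0, init m))) =? 0.

Lemma K_halted_after m : K m <-> exists n, halted_after m n = true.
Proof.
  rewrite K_iff. unfold halted_after. split; intros [n Hn]; exists n; revert Hn;
    rewrite nth_error_decode; destruct code_drop; simpl; congruence.
Qed.

Definition HALTED := Lam (Lam (App ISZERO (App (App DROP (Var 1))
  (App FST (App (App (Var 0) (App NEXT (Var 1))) (tpair (num 0) (App INIT (Var 1)))))))).

Lemma HALTED_num m n : beta_conv (App (App HALTED (num m)) (num n)) (tbool (halted_after m n)).
Proof.
  unfold HALTED. beta. beta. rewrite num_app.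
  destruct (NEXT_iter m n) as [R [[HcR _] HC]]. rewrite HC.
  rewrite FST_tpair, DROP_num, ISZERO_num by solve_closed. reflexivity.
Qed.

Definition SEARCH := Lam (Lam (Lam (App (App (App (App HALTED (Var 2)) (Var 0)) TRUE)
                                         (App (App (Var 1) (Var 1)) (App SUCC (Var 0)))))).
Definition HALTS := Lam (App (App (App SEARCH (Var 0)) (App SEARCH (Var 0))) (num 0)).

Lemma SEARCH_unfold m n :
  beta_conv (App (App (App SEARCH (num m)) (App SEARCH (num m))) (num n))
    (App (App (tbool (halted_after m n)) TRUE)
         (App (App (App SEARCH (num m)) (App SEARCH (num m))) (num (S n)))).
Proof. unfold SEARCH at 1. beta. beta. beta. rewrite HALTED_num, SUCC_num. reflexivity. Qed.

Lemma HALTS_true m : K m -> beta_conv (App HALTS (num m)) TRUE.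
Proof.
  intros HK. apply K_halted_after in HK as [n Hn].
  assert (H : forall j, j <= n ->
            beta_conv (App (App (App SEARCH (num m)) (App SEARCH (num m))) (num (n - j))) TRUE).
  { induction j; intros Hj; rewrite SEARCH_unfold.
    - rewrite Nat.sub_0_r, Hn. apply TRUE_app. solve_closed.
    - replace (S (n - S j)) with (n - j) by lia. rewrite IHj by lia.
      destruct (halted_after m (n - S j)); rewrite tbool_app by solve_closed; reflexivity. }
  unfold HALTS. beta. specialize (H n ltac:(lia)). rewrite Nat.sub_diag in H. exact H.
Qed.

Definition env_empty : nat -> pset := fun _ _ => False.

Lemma gapp_FALSE A B : gapp (gapp (denote FALSE env_empty) A) B = B.
Proof.
  change (denote FALSE env_empty) with (glam (fun d => denote (Lam (Var 0)) (scons d env_empty))).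
  rewrite gapp_glam. change (denote (Lam (Var 0)) (scons A env_empty))
    with (glam (fun d => denote (Var 0) (scons d (scons A env_empty)))).
  rewrite gapp_glam. reflexivity.
Qed.

Section NeverHalts.

Variable m : nat.
Hypothesis never_halted : forall n, halted_after m n = false.

Let search := denote (App SEARCH (num m)) env_empty.

Lemma search_member e d x : search (Cantor.to_nat (e, Cantor.to_nat (d, x))) ->
  gapp (gapp (gapp (denote (App HALTED (num m)) env_empty) (finset d)) (denote TRUE env_empty))
       (gapp (gapp (finset e) (finset e)) (gapp (denote SUCC env_empty) (finset d))) x.
Proof.
  unfold search. intros H.
  assert (E : beta_conv (App SEARCH (num m))
    (Lam (Lam (App (App (App (App HALTED (num m)) (Var 0)) TRUE)
                   (App (App (Var 1) (Var 1)) (App SUCC (Var 0))))))).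
  { unfold SEARCH. beta. reflexivity. }
  rewrite (denote_beta_conv _ _ E) in H. cbn [denote] in H. unfold glam in H.
  repeat (rewrite Cantor.cancel_of_to in H; cbn [fst snd scons] in H).
  rewrite (denote_closed HALTED _ env_empty), (denote_closed (num m) _ env_empty),
    (denote_closed TRUE _ env_empty), (denote_closed SUCC _ env_empty) in H by solve_closed.
  exact H.
Qed.

Lemma search_member_step e d n x : subset (finset d) (denote (num n) env_empty) ->
  search (Cantor.to_nat (e, Cantor.to_nat (d, x))) ->
  gapp (gapp (finset e) (finset e)) (denote (num (S n)) env_empty) x.
Proof.
  intros Hd H. apply search_member in H.
  assert (Hhalted : subset (gapp (denote (App HALTED (num m)) env_empty) (finset d))
                           (denote FALSE env_empty)).
  { change (denote FALSE env_empty) with (denote (tbool false) env_empty).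
    rewrite <- (never_halted n), <- (denote_beta_conv _ _ (HALTED_num m n)).
    apply gapp_mono; auto. intros z; auto. }
  assert (Hsucc : subset (gapp (denote SUCC env_empty) (finset d)) (denote (num (S n)) env_empty)).
  { rewrite <- (denote_beta_conv _ _ (SUCC_num n)). apply gapp_mono; auto. intros z; auto. }
  rewrite <- (gapp_FALSE (denote TRUE env_empty)
                (gapp (gapp (finset e) (finset e)) (denote (num (S n)) env_empty))).
  revert H. apply gapp_mono; [apply gapp_mono; auto; intros z; auto|].
  apply gapp_mono; auto. intros z; auto.
Qed.

(* a successful self-application [w w] must use a code [e'] smaller than the code [e] of [w] *)
Lemma search_self_app_empty : forall e, subset (finset e) search ->
  forall n x, ~ gapp (gapp (finset e) (finset e)) (denote (num n) env_empty) x.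
Proof.
  intros e. induction e as [e IH] using (well_founded_induction lt_wf).
  intros He n x [d [Hd [e' [He' Hx]]]].
  assert (Hlt : e' < e).
  { apply testbit_lt in Hx. pose proof (Cantor.to_nat_non_decreasing e' (Cantor.to_nat (d, x))). lia. }
  apply (IH e' Hlt (fun y Hy => He y (He' y Hy)) (S n) x).
  apply (search_member_step e' d n x Hd (He _ Hx)).
Qed.

Lemma HALTS_denote_empty x : ~ denote (App HALTS (num m)) env_empty x.
Proof.
  assert (E : beta_conv (App HALTS (num m))
                (App (App (App SEARCH (num m)) (App SEARCH (num m))) (num 0))).
  { unfold HALTS. beta. reflexivity. }
  rewrite (denote_beta_conv _ _ E). cbn [denote]. fold search.
  intros [d [Hd [e [He Hx]]]].
  apply (search_self_app_empty e He 1 x), (search_member_step e d 0 x Hd Hx).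
Qed.

End NeverHalts.

Lemma HALTS_false m : ~ K m -> ~ betaeta_conv (App HALTS (num m)) TRUE.
Proof.
  intros HK Hc. destruct (betaeta_conv_TRUE_nonempty _ Hc env_empty) as [x Hx].
  apply (HALTS_denote_empty m) with x; auto.
  intros n. destruct (halted_after m n) eqn:E; auto.
  exfalso. apply HK, K_halted_after. eauto.
Qed.

(** * Composing register-machine programs *)

Lemma mstep_at X P pc T i c' : nth_error P pc = Some i ->
  star (mstep X P) (exec X i pc T) c' -> star (mstep X P) (pc, T) c'.
Proof.
  intros H1 H2. eapply rt_trans; [|exact H2]. apply rt_step. exists i; split; [exact H1 | reflexivity].
Qed.

Definition instr_reg (i : instr) := match i with Inc r => r | Dec r _ => r | Orc r => r end.
Definition max_reg (p : prog) := fold_right (fun i m => Nat.max (instr_reg i) m) 0 p.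

Lemma instr_reg_le_max_reg p : forall pc i, nth_error p pc = Some i -> instr_reg i <= max_reg p.
Proof.
  induction p; intros pc i H; destruct pc; simpl in H; try discriminate.
  - injection H; intros; subst. simpl. lia.
  - apply IHp in H. simpl. lia.
Qed.

Lemma exec_other_reg X i pc s r : r <> instr_reg i -> snd (exec X i pc s) r = s r.
Proof.
  intros Hr. unfold upd. destruct i as [q|q j|q]; simpl in *; [| destruct (s q); simpl |];
    unfold upd; try reflexivity; destruct (Nat.eqb_spec r q); congruence.
Qed.

Lemma star_mstep_high_reg X p c c' : star (mstep X p) c c' ->
  forall r, max_reg p < r -> snd c' r = snd c r.
Proof.
  induction 1 as [c c' [i [Hi ->]]| |c1 c2 c3 _ IH1 _ IH2]; intros r Hr; auto.
  - apply exec_other_reg. apply instr_reg_le_max_reg in Hi. lia.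
  - rewrite IH2, IH1; auto.
Qed.

Definition embedded (P : prog) (b : nat) (B : prog) :=
  forall i x, nth_error B i = Some x -> nth_error P (b + i) = Some x.

Lemma embedded_refl B : embedded B 0 B.
Proof. intros i x H; auto. Qed.

Lemma embedded_app_l A Q b B : embedded A b B -> embedded (A ++ Q) b B.
Proof.
  intros H i x Hx. rewrite nth_error_app1; auto.
  apply nth_error_Some. rewrite (H _ _ Hx). congruence.
Qed.

Lemma embedded_app_r A Q b B : embedded Q b B -> embedded (A ++ Q) (length A + b) B.
Proof.
  intros H i x Hx. rewrite nth_error_app2 by lia.
  replace (length A + b + i - length A) with (b + i) by lia. auto.
Qed.

Lemma embedded_trans P q B q' B' : embedded P q B -> embedded B q' B' -> embedded P (q + q') B'.
Proof. intros H1 H2 i x Hx. rewrite <- Nat.add_assoc. apply H1, H2, Hx. Qed.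

Lemma embedded_hd P q x B : embedded P q (x :: B) -> nth_error P q = Some x.
Proof. intros H. rewrite <- (Nat.add_0_r q). apply H. reflexivity. Qed.

Lemma embedded_tl P q x B : embedded P q (x :: B) -> embedded P (S q) B.
Proof. intros H i y Hy. replace (S q + i) with (q + S i) by lia. apply H. auto. Qed.

(* A program called as a subroutine has its registers shifted by 2 and its exits redirected
   to the end of its block; registers 0 and 1 of the caller are left untouched. *)
Definition relocate (base len j : nat) := if j <? len then base + j else base + len.

Definition shift_instr base len (i : instr) :=
  match i with
  | Inc r => Inc (r + 2)
  | Dec r j => Dec (r + 2) (relocate base len j)
  | Orc r => Orc (r + 2)
  end.

Definition shift_prog base (p : prog) := map (shift_instr base (length p)) p.

Definition shifted_regs (s T : regs) := forall r, T (r + 2) = s r.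

Lemma shifted_regs_upd s T r v : shifted_regs s T ->
  shifted_regs (upd s r v) (upd T (r + 2) v) /\ upd T (r + 2) v 0 = T 0 /\ upd T (r + 2) v 1 = T 1.
Proof.
  intros H. unfold upd. split; [|split; nat_cases; auto; lia].
  intros q. rewrite H. nat_cases; auto; lia.
Qed.

Lemma mstep_shift X P base p pc s pc' s' T : embedded P base (shift_prog base p) ->
  mstep X p (pc, s) (pc', s') -> shifted_regs s T ->
  exists T', mstep X P (base + pc, T) (relocate base (length p) pc', T') /\
    shifted_regs s' T' /\ T' 0 = T 0 /\ T' 1 = T 1.
Proof.
  intros Hsub [i [Hi He]] Hc. simpl in Hi, He.
  assert (Hlt : pc < length p) by (apply nth_error_Some; congruence).
  assert (HP : nth_error P (base + pc) = Some (shift_instr base (length p) i)).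
  { apply Hsub. unfold shift_prog. rewrite nth_error_map, Hi. reflexivity. }
  assert (HR : relocate base (length p) (S pc) = S (base + pc)).
  { unfold relocate. destruct (Nat.ltb_spec (S pc) (length p)); lia. }
  assert (Hmstep : forall T', T' = snd (exec X (shift_instr base (length p) i) (base + pc) T) ->
            relocate base (length p) pc' = fst (exec X (shift_instr base (length p) i) (base + pc) T) ->
            mstep X P (base + pc, T) (relocate base (length p) pc', T')).
  { intros T' -> E. exists (shift_instr base (length p) i). split; auto. rewrite E. symmetry. apply surjective_pairing. }
  destruct i as [r|r j|r]; simpl in He, Hmstep; [| destruct (s r) as [|v] eqn:Esr |];
    injection He; intros -> ->; rewrite ?Hc, ?Esr in Hmstep.
  - eexists; split; [apply Hmstep; eauto|]. apply shifted_regs_upd; auto.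
  - exists T; split; [apply Hmstep|]; auto.
  - eexists; split; [apply Hmstep; eauto|]. apply shifted_regs_upd; auto.
  - eexists; split; [apply Hmstep; eauto|]. apply shifted_regs_upd; auto.
Qed.

Lemma star_shift X P base p c c' : embedded P base (shift_prog base p) -> star (mstep X p) c c' ->
  forall T, shifted_regs (snd c) T ->
  exists T', star (mstep X P) (relocate base (length p) (fst c), T) (relocate base (length p) (fst c'), T') /\
    shifted_regs (snd c') T' /\ T' 0 = T 0 /\ T' 1 = T 1.
Proof.
  intros Hsub H. induction H as [[pc s] [pc' s'] Hs|c|c1 c2 c3 _ IH1 _ IH2]; intros T Hc.
  - destruct (mstep_shift X P base p pc s pc' s' T Hsub Hs Hc) as [T' [HT' Hrest]].
    exists T'; split; auto. apply rt_step. simpl.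
    replace (relocate base (length p) pc) with (base + pc); auto.
    destruct Hs as [i [Hi _]]. assert (Hlt : pc < length p) by (apply nth_error_Some; simpl in Hi; congruence).
    unfold relocate. destruct (Nat.ltb_spec pc (length p)); lia.
  - exists T; repeat split; auto using rt_refl.
  - destruct (IH1 T Hc) as [T1 [S1 [C1 [E0 E1]]]]. destruct (IH2 T1 C1) as [T2 [S2 [C2 [F0 F1]]]].
    exists T2; repeat split; eauto using rt_trans; congruence.
Qed.

Lemma call_spec X P base e x y T : Phi X e x y -> embedded P base (shift_prog base (decode e)) ->
  T 2 = x -> (forall r, 3 <= r -> T r = 0) ->
  exists T', star (mstep X P) (base, T) (base + length (decode e), T') /\ T' 2 = y /\
    T' 0 = T 0 /\ T' 1 = T 1 /\ (forall r, max_reg (decode e) + 3 <= r -> T' r = 0).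
Proof.
  intros [fuel Hrun] Hsub H2 H3.
  destruct (run_star _ _ _ _ _ _ Hrun) as [[pc' s'] [Hst [Hn Hv]]].
  assert (Hc : shifted_regs (init x) T).
  { intros r. unfold init. destruct r; simpl; auto. apply H3. lia. }
  destruct (star_shift X P base _ _ _ Hsub Hst T Hc) as [T' [HT' [Hc' [E0 E1]]]].
  simpl in HT', Hn, Hc'. exists T'.
  assert (R0 : relocate base (length (decode e)) 0 = base).
  { unfold relocate. destruct (Nat.ltb_spec 0 (length (decode e))); lia. }
  assert (R1 : relocate base (length (decode e)) pc' = base + length (decode e)).
  { apply nth_error_None in Hn. unfold relocate. destruct (Nat.ltb_spec pc' (length (decode e))); lia. }
  rewrite R0, R1 in HT'. split; [|split; [|split; [|split]]]; auto.
  - rewrite <- (Nat.add_0_l 2), Hc'. auto.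
  - intros r Hr. replace r with ((r - 2) + 2) by lia. rewrite Hc'.
    pose proof (star_mstep_high_reg _ _ _ _ Hst (r - 2)) as Hreg. simpl in Hreg.
    rewrite Hreg by lia. unfold init. destruct (Nat.eqb_spec (r - 2) 0); auto; lia.
Qed.

Fixpoint clear_block (q r n : nat) : prog :=
  match n with 0 => [] | S n => Dec r (q + 2) :: Dec 1 q :: clear_block (q + 2) (S r) n end.

Lemma clear_block_length q r n : length (clear_block q r n) = 2 * n.
Proof. revert q r; induction n; intros; simpl; auto. rewrite IHn. lia. Qed.

Lemma clear_reg_spec X P q r : nth_error P q = Some (Dec r (q + 2)) ->
  nth_error P (S q) = Some (Dec 1 q) -> r <> 1 -> forall T, T 1 = 0 ->
  exists T', star (mstep X P) (q, T) (q + 2, T') /\ T' r = 0 /\ (forall i, i <> r -> T' i = T i).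
Proof.
  intros H1 H2 Hr T. remember (T r) as v eqn:Ev. revert T Ev. induction v; intros T Ev HT1.
  - exists T. split; auto. apply (mstep_at _ _ _ _ _ _ H1). simpl. rewrite <- Ev. apply rt_refl.
  - assert (Hr1 : upd T r v 1 = 0) by (unfold upd; nat_cases; auto; lia).
    destruct (IHv (upd T r v)) as [T' [HS [HT'r HT']]]; auto.
    { unfold upd. rewrite Nat.eqb_refl. auto. }
    exists T'. split; [|split; auto].
    + apply (mstep_at _ _ _ _ _ _ H1). simpl. rewrite <- Ev.
      apply (mstep_at _ _ _ _ _ _ H2). simpl. rewrite Hr1. exact HS.
    + intros i Hi. rewrite HT' by auto. unfold upd. nat_cases; auto; lia.
Qed.

Lemma clear_block_spec X P n : forall q r T, embedded P q (clear_block q r n) -> T 1 = 0 -> 2 <= r ->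
  exists T', star (mstep X P) (q, T) (q + 2 * n, T') /\
    (forall i, r <= i < r + n -> T' i = 0) /\ (forall i, i < r \/ r + n <= i -> T' i = T i).
Proof.
  induction n; intros q r T Hs H1 Hr.
  - exists T. rewrite Nat.add_0_r. repeat split; auto using rt_refl. intros; lia.
  - simpl in Hs.
    destruct (clear_reg_spec X P q r (embedded_hd _ _ _ _ Hs)
                (embedded_hd _ _ _ _ (embedded_tl _ _ _ _ Hs)) ltac:(lia) T H1) as [T1 [S1 [C1 O1]]].
    assert (Hs2 : embedded P (q + 2) (clear_block (q + 2) (S r) n)).
    { replace (q + 2) with (S (S q)) at 1 by lia. apply (embedded_tl _ _ _ _ (embedded_tl _ _ _ _ Hs)). }
    destruct (IHn (q + 2) (S r) T1 Hs2) as [T2 [S2 [C2 O2]]]; [rewrite O1; auto; lia | lia |].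
    exists T2. split; [|split].
    + replace (q + 2 * S n) with (q + 2 + 2 * n) by lia. eapply rt_trans; eauto.
    + intros i Hi. destruct (Nat.eq_dec i r) as [->|]; [rewrite O2 by lia; auto | apply C2; lia].
    + intros i Hi. rewrite O2, O1 by lia. auto.
Qed.

Lemma add_block_spec X P a : forall q T, embedded P q (repeat (Inc 2) a) ->
  exists T', star (mstep X P) (q, T) (q + a, T') /\ T' 2 = T 2 + a /\ (forall i, i <> 2 -> T' i = T i).
Proof.
  induction a; intros q T Hs.
  - exists T. rewrite !Nat.add_0_r. repeat split; auto using rt_refl.
  - destruct (IHa (S q) (upd T 2 (S (T 2))) (embedded_tl _ _ _ _ Hs)) as [T' [S' [E2 Eo]]].
    exists T'. split; [|split].
    + apply (mstep_at _ _ _ _ _ _ (embedded_hd _ _ _ _ Hs)).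
      replace (q + S a) with (S q + a) by lia. exact S'.
    + rewrite E2. unfold upd. simpl. lia.
    + intros i Hi. rewrite Eo by auto. unfold upd. nat_cases; auto; lia.
Qed.

Lemma dec_block_ge X P F n : forall q T, embedded P q (repeat (Dec 2 F) n) -> n <= T 2 ->
  exists T', star (mstep X P) (q, T) (q + n, T') /\ T' 2 = T 2 - n /\ T' 0 = T 0 /\ T' 1 = T 1.
Proof.
  induction n; intros q T Hs Hn.
  - exists T. rewrite Nat.add_0_r, Nat.sub_0_r. repeat split; auto using rt_refl.
  - destruct (T 2) as [|v] eqn:E2; [lia|].
    destruct (IHn (S q) (upd T 2 v) (embedded_tl _ _ _ _ Hs)) as [T' [H1 [H2 [H3 H4]]]];
      [unfold upd; simpl; lia|].
    exists T'. split; [|split; [|split]].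
    + apply (mstep_at _ _ _ _ _ _ (embedded_hd _ _ _ _ Hs)). simpl. rewrite E2.
      replace (q + S n) with (S q + n) by lia. exact H1.
    + rewrite H2. unfold upd. simpl. lia.
    + rewrite H3. reflexivity.
    + rewrite H4. reflexivity.
Qed.

Lemma dec_block_lt X P F n : forall q T, embedded P q (repeat (Dec 2 F) n) -> T 2 < n ->
  exists T', star (mstep X P) (q, T) (F, T') /\ T' 0 = T 0 /\ T' 1 = T 1.
Proof.
  induction n; intros q T Hs Hn; [lia|].
  destruct (T 2) as [|v] eqn:E2.
  - exists T. split; auto. apply (mstep_at _ _ _ _ _ _ (embedded_hd _ _ _ _ Hs)).
    simpl. rewrite E2. apply rt_refl.
  - destruct (IHn (S q) (upd T 2 v) (embedded_tl _ _ _ _ Hs)) as [T' [H1 [H3 H4]]];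
      [unfold upd; simpl; lia|].
    exists T'. split; [|split].
    + apply (mstep_at _ _ _ _ _ _ (embedded_hd _ _ _ _ Hs)). simpl. rewrite E2. exact H1.
    + rewrite H3. reflexivity.
    + rewrite H4. reflexivity.
Qed.

Definition compare_block (b c : nat) :=
  repeat (Dec 2 (b + c + 1)) c ++ [Dec 2 (b + c + 2); Dec 1 (b + c + 3); Inc 0].

Lemma compare_block_spec X P b c T : embedded P b (compare_block b c) -> T 0 = 0 -> T 1 = 0 ->
  exists T', star (mstep X P) (b, T) (b + c + 3, T') /\ T' 0 = (if T 2 =? c then 1 else 0).
Proof.
  intros Hb H0 H1.
  pose proof (embedded_trans _ _ _ _ _ Hb (embedded_app_l _ _ _ _ (embedded_refl _))) as Hdecs.
  pose proof (embedded_trans _ _ _ _ _ Hb (embedded_app_r _ _ _ _ (embedded_refl _))) as Htail.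
  rewrite Nat.add_0_r in Hdecs, Htail. rewrite repeat_length in Htail.
  pose proof (embedded_hd _ _ _ _ Htail) as I0.
  pose proof (embedded_hd _ _ _ _ (embedded_tl _ _ _ _ Htail)) as I1.
  pose proof (embedded_hd _ _ _ _ (embedded_tl _ _ _ _ (embedded_tl _ _ _ _ Htail))) as I2.
  replace (S (b + c)) with (b + c + 1) in I1 by lia.
  replace (S (S (b + c))) with (b + c + 2) in I2 by lia.
  destruct (Nat.lt_ge_cases (T 2) c) as [Hlt|Hge].
  - destruct (dec_block_lt X P _ c b T Hdecs Hlt) as [T' [S' [G0 G1]]].
    exists T'. split.
    + eapply rt_trans; [exact S'|]. apply (mstep_at _ _ _ _ _ _ I1). simpl. rewrite G1, H1. apply rt_refl.
    + rewrite G0, H0. destruct (Nat.eqb_spec (T 2) c); [lia | auto].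
  - destruct (dec_block_ge X P _ c b T Hdecs Hge) as [T' [S' [G2 [G0 G1]]]].
    destruct (T' 2) as [|w] eqn:EW.
    + exists (upd T' 0 (S (T' 0))). split.
      * eapply rt_trans; [exact S'|]. apply (mstep_at _ _ _ _ _ _ I0). simpl. rewrite EW.
        apply (mstep_at _ _ _ _ _ _ I2). simpl. replace (S (b + c + 2)) with (b + c + 3) by lia.
        apply rt_refl.
      * unfold upd. simpl. rewrite G0, H0. destruct (Nat.eqb_spec (T 2) c); auto; lia.
    + exists (upd T' 2 w). split.
      * eapply rt_trans; [exact S'|]. apply (mstep_at _ _ _ _ _ _ I0). simpl. rewrite EW.
        replace (S (b + c)) with (b + c + 1) by lia.
        apply (mstep_at _ _ _ _ _ _ I1). simpl. unfold upd at 1. simpl. rewrite G1, H1. apply rt_refl.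
      * unfold upd. simpl. rewrite G0, H0. destruct (Nat.eqb_spec (T 2) c); auto; lia.
Qed.

(** * The reduction *)

Section ReductionProgram.

Variables (a0 c : nat) (p1 p2 : prog).

Definition scratch := Nat.max (max_reg p1) (max_reg p2).
Definition clear_pc := a0 + 1 + length p1.
Definition exit_pc := clear_pc + 2 * scratch + 1.
Definition compare_pc := exit_pc + length p2.

(* Starting from input [m] in register 0: load [a0] into register 2, apply [p1] to it [m] times
   (counting register 0 down, clearing the scratch registers of [p1] after each call), apply
   [p2], and output whether the result equals [c].  Register 1 stays 0, so [Dec 1 j] is a jump. *)
Definition reduction_prog :=
  repeat (Inc 2) a0 ++ [Dec 0 exit_pc] ++ shift_prog (a0 + 1) p1 ++ clear_block clear_pc 3 scratch ++
  [Dec 1 a0] ++ shift_prog exit_pc p2 ++ compare_block compare_pc c.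

End ReductionProgram.

Lemma embedded_here B Q q : q = 0 -> embedded (B ++ Q) q B.
Proof. intros ->. apply embedded_app_l, embedded_refl. Qed.

Lemma embedded_self B q : q = 0 -> embedded B q B.
Proof. intros ->. apply embedded_refl. Qed.

Lemma embedded_skip A Q q B : length A <= q -> embedded Q (q - length A) B -> embedded (A ++ Q) q B.
Proof. intros H1 H2. replace q with (length A + (q - length A)) by lia. apply embedded_app_r; auto. Qed.

Ltac prog_length :=
  unfold shift_prog, compare_block, compare_pc, exit_pc, clear_pc;
  rewrite ?length_app, ?length_map, ?repeat_length, ?clear_block_length; simpl length; lia.

Ltac find_block := first
  [ apply embedded_here; prog_length
  | apply embedded_self; prog_length
  | apply embedded_skip; [prog_length | find_block] ].

Lemma reduction_prog_length a0 c p1 p2 :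
  length (reduction_prog a0 c p1 p2) = compare_pc a0 p1 p2 + c + 3.
Proof. unfold reduction_prog. prog_length. Qed.

Section ReductionRun.

Variables (X : nat -> bool) (a0 c e1 e2 m : nat) (v : nat -> nat).
Hypothesis v_0 : v 0 = a0.
Hypothesis v_S : forall j, Phi X e1 (v j) (v (S j)).

Let p1 := decode e1.
Let p2 := decode e2.
Let P := reduction_prog a0 c p1 p2.

Lemma loop_spec k : forall T, k <= m -> T 0 = k -> T 1 = 0 -> T 2 = v (m - k) ->
  (forall r, 3 <= r -> T r = 0) ->
  exists T', star (mstep X P) (a0, T) (exit_pc a0 p1 p2, T') /\ T' 0 = 0 /\ T' 1 = 0 /\
    T' 2 = v m /\ (forall r, 3 <= r -> T' r = 0).
Proof.
  assert (Htest : nth_error P a0 = Some (Dec 0 (exit_pc a0 p1 p2))).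
  { apply (embedded_hd _ _ _ []). unfold P, reduction_prog. find_block. }
  assert (Hcall : embedded P (a0 + 1) (shift_prog (a0 + 1) p1)) by (unfold P, reduction_prog; find_block).
  assert (Hclear : embedded P (clear_pc a0 p1) (clear_block (clear_pc a0 p1) 3 (scratch p1 p2)))
    by (unfold P, reduction_prog; find_block).
  assert (Hjump : nth_error P (clear_pc a0 p1 + 2 * scratch p1 p2) = Some (Dec 1 a0)).
  { apply (embedded_hd _ _ _ []). unfold P, reduction_prog. find_block. }
  induction k; intros T Hk HT0 HT1 HT2 HT3.
  - exists T. rewrite Nat.sub_0_r in HT2. repeat split; auto.
    apply (mstep_at _ _ _ _ _ _ Htest). simpl. rewrite HT0. apply rt_refl.
  - destruct (call_spec X P (a0 + 1) e1 (v (m - S k)) (v (S (m - S k))) (upd T 0 k)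
                (v_S _) Hcall) as [T1 [S1 [E2 [E0 [E1 E3]]]]]; auto.
    { intros r Hr. unfold upd. destruct (Nat.eqb_spec r 0); [lia | auto]. }
    unfold upd in E0, E1; simpl in E0, E1.
    destruct (clear_block_spec X P _ _ _ T1 Hclear ltac:(congruence) ltac:(lia)) as [T2 [S2 [C2 O2]]].
    destruct (IHk T2) as [T3 [S3 [F0 [F1 [F2 F3]]]]]; try lia.
    { rewrite O2, E0 by lia. auto. }
    { rewrite O2, E1 by lia. auto. }
    { rewrite O2, E2 by lia. f_equal. lia. }
    { intros r Hr. destruct (Nat.lt_ge_cases r (3 + scratch p1 p2)).
      - apply C2. lia.
      - rewrite O2 by lia. apply E3. unfold scratch, p1 in *. lia. }
    exists T3. split; auto.
    apply (mstep_at _ _ _ _ _ _ Htest). simpl. rewrite HT0.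
    replace (S a0) with (a0 + 1) by lia. change (length (decode e1)) with (length p1) in S1.
    eapply rt_trans; [exact S1|]. eapply rt_trans; [exact S2|].
    apply (mstep_at _ _ _ _ _ _ Hjump). simpl. rewrite O2, E1, HT1 by lia. exact S3.
Qed.

Lemma reduction_prog_run y : Phi X e2 (v m) y ->
  exists fuel, run X P fuel 0 (init m) = Some (if y =? c then 1 else 0).
Proof.
  intros Hy.
  destruct (add_block_spec X P a0 0 (init m)) as [T0 [S0 [T0_2 T0_other]]].
  { unfold P, reduction_prog. find_block. }
  destruct (loop_spec m T0) as [T1 [S1 [E0 [E1 [E2 E3]]]]].
  { lia. }
  { rewrite T0_other by lia. reflexivity. }
  { rewrite T0_other by lia. reflexivity. }
  { rewrite T0_2, Nat.sub_diag, v_0. reflexivity. }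
  { intros r Hr. rewrite T0_other by lia. unfold init. destruct (Nat.eqb_spec r 0); auto; lia. }
  destruct (call_spec X P (exit_pc a0 p1 p2) e2 (v m) y T1 Hy) as [T2 [S2 [F2 [F0 [F1 _]]]]]; auto.
  { unfold P, reduction_prog. find_block. }
  destruct (compare_block_spec X P (compare_pc a0 p1 p2) c T2) as [T3 [S3 HT3]]; try congruence.
  { unfold P, reduction_prog. find_block. }
  destruct (star_run X P (0, init m) (compare_pc a0 p1 p2 + c + 3, T3)) as [fuel Hf].
  - eapply rt_trans; [exact S0|]. eapply rt_trans; [exact S1|].
    eapply rt_trans; [exact S2|]. exact S3.
  - apply nth_error_None. unfold P. rewrite reduction_prog_length. simpl. lia.
  - exists fuel. simpl in Hf. rewrite Hf, HT3, F2. reflexivity.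
Qed.

End ReductionRun.

Lemma embedding_computes_K (R : relation term) X :
  (forall t u, beta_conv t u -> R t u) -> (forall t u, R t u -> betaeta_conv t u) ->
  embeds_in_K1 R X -> turing_reducible K X.
Proof.
  intros HbR HRbe [f [Hresp [Hinj Happ]]].
  set (P := reduction_prog (f (num 0)) (f TRUE) (decode (f SUCC)) (decode (f HALTS))).
  exists (encode P). intros m.
  assert (Hv_S : forall j, Phi X (f SUCC) (f (num j)) (f (num (S j)))).
  { intros j. rewrite <- (Hresp _ _ (HbR _ _ (SUCC_num j))). apply Happ. }
  destruct (reduction_prog_run X (f (num 0)) (f TRUE) (f SUCC) (f HALTS) m (fun j => f (num j))
              eq_refl Hv_S _ (Happ HALTS (num m))) as [fuel Hf].
  assert (HPhi : Phi X (encode P) m (if f (App HALTS (num m)) =? f TRUE then 1 else 0)).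
  { exists fuel. rewrite decode_encode. exact Hf. }
  split.
  - intros HK. rewrite (Hresp _ _ (HbR _ _ (HALTS_true m HK))), Nat.eqb_refl in HPhi. exact HPhi.
  - intros HK. destruct (Nat.eqb_spec (f (App HALTS (num m))) (f TRUE)) as [E|E]; auto.
    exfalso. apply (HALTS_false m HK), HRbe, Hinj, E.
Qed.

Theorem corollary5p2 (X : nat -> bool) :
  (embeds_in_K1 betaeta_conv X \/ embeds_in_K1 beta_conv X) ->
  turing_reducible K X.
Proof.
  intros [Hm|Hm].
  - apply (embedding_computes_K betaeta_conv X); auto using beta_conv_betaeta_conv.
  - apply (embedding_computes_K beta_conv X); auto using beta_conv_betaeta_conv.
Qed.
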